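(* Assume (C1), (C2), (PQM) and (G). Let $(\overline\Phi,\underline\Phi)$ be a pair of upper and lower solutions of the wave system (W) with $0\le\underline\Phi(t)\le\overline\Phi(t)\le(M_1,M_2,M_3)$ for all $t\in\mathbb R$, let $\Gamma=\{\Phi\in C(\mathbb R,\mathbb R^3):\underline\Phi\le\Phi\le\overline\Phi\}$, and let $0<\mu<\min\{\delta_1,\delta_2,\delta_3\}$. Then: (i) $F(\Gamma)\subset\Gamma$; more precisely, for every $\Phi\in\Gamma$, $\underline\phi\le F_1(\underline\phi,\underline\varphi,\underline\psi)\le F_1(\Phi)\le F_1(\overline\phi,\overline\varphi,\overline\psi)\le\overline\phi$, $\underline\varphi\le F_2(\overline\phi,\underline\varphi,\overline\psi)\le F_2(\Phi)\le F_2(\underline\phi,\overline\varphi,\underline\psi)\le\overline\varphi$, $\underline\psi\le F_3(\underline\phi,\underline\varphi,\underline\psi)\le F_3(\Phi)\le F_3(\overline\phi,\overline\varphi,\overline\psi)\le\overline\psi$; (ii) $F:\Gamma\to B_\mu(\mathbb R,\mathbb R^3)$ is continuous with respect to $|\cdot|_\mu$; (iii) $F:\Gamma\to\Gamma$ is compact, i.e. $F(\Gamma)$ is relatively compact in $(B_\mu(\mathbb R,\mathbb R^3),|\cdot|_\mu)$.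
   Context: Fix $\sigma>0$, $c>0$, $D_1,D_2,D_3>0$, real numbers $r_1,r_2,r_3$, and constants $k_i>0$, $M_i\ge k_i$ ($i=1,2,3$). Let $X=C([-\sigma,0],\mathbb R)$ with the sup norm. For $\Phi=(\phi,\varphi,\psi)\in C(\mathbb R,\mathbb R^3)$ and $s\in\mathbb R$ the history segment is $\Phi_s=(\phi_s,\varphi_s,\psi_s)\in X^3$, $\phi_s(\theta)=\phi(s+\theta)$ for $\theta\in[-\sigma,0]$. For a constant $a$, $\hat a$ is the constant function with value $a$. Functions $f_{1c},f_{2c},f_{3c}:X^3\to\mathbb R$ are given. A triple $(\chi_1,\chi_2,\chi_3)\in X^3$ is admissible if $0\le\chi_j\le M_j$ on $[-\sigma,0]$, $j=1,2,3$. Inequalities between functions are pointwise and componentwise. Wave system (W): $D_1\phi''(t)-c\phi'(t+r_1)+f_{1c}(\Phi_{t+r_1})=0$, $D_2\varphi''(t)-c\varphi'(t+r_2)+f_{2c}(\Phi_{t+r_2})=0$, $D_3\psi''(t)-c\psi'(t+r_3)+f_{3c}(\Phi_{t+r_3})=0$, $t\in\mathbb R$. (C1): $f_{ic}(\hat0,\hat0,\hat0)=f_{ic}(\hat k_1,\hat k_2,\hat k_3)=0$, $i=1,2,3$. (C2): there are $L_1,L_2,L_3>0$ with $|f_{ic}(\Phi)-f_{ic}(\Psi)|\le L_i\|\Phi-\Psi\|$ for all admissible $\Phi,\Psi\in X^3$ ($\|\cdot\|$ the max of the sup norms of the components). (PQM): there are $\beta_1,\beta_2,\beta_3>0$ such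 that for all admissible $(\phi_1,\varphi_1,\psi_1),(\phi_2,\varphi_2,\psi_2)$ with $\phi_2\le\phi_1,\varphi_2\le\varphi_1,\psi_2\le\psi_1$: (P1) $f_{1c}(\phi_1,\varphi_1,\psi_1)-f_{1c}(\phi_2,\varphi_2,\psi_2)+\beta_1[\phi_1(0)-\phi_2(0)]\ge0$; (P2) $f_{2c}(\phi_1,\varphi_1,\psi_1)-f_{2c}(\phi_1,\varphi_2,\psi_1)+\beta_2[\varphi_1(0)-\varphi_2(0)]\ge0$; (P3) $f_{2c}(\phi_1,\varphi_1,\psi_1)\le f_{2c}(\phi_2,\varphi_1,\psi_1)$; (P4) $f_{2c}(\phi_1,\varphi_1,\psi_1)\le f_{2c}(\phi_1,\varphi_1,\psi_2)$; (P5) $f_{3c}(\phi_1,\varphi_1,\psi_1)-f_{3c}(\phi_2,\varphi_2,\psi_2)+\beta_3[\psi_1(0)-\psi_2(0)]\ge0$. $H_i(\Phi)(t)=f_{ic}(\Phi_{t+r_i})+\beta_i\Phi_{(i)}(t+r_i)$ where $\Phi_{(1)}=\phi,\Phi_{(2)}=\varphi,\Phi_{(3)}=\psi$. (G): for each $i$ there is a continuous kernel $G_i:\mathbb R\to[0,\infty)$ with $G_i(\xi)\le K_ie^{-\delta_i|\xi|}$ ($K_i,\delta_i>0$) such that for every bounded continuous $h$, $x=G_i*h$ is the unique bounded solution of $D_ix''(t)-cx'(t+r_i)-\beta_ix(t+r_i)+h(t)=0$. $F_i(\Phi)(t)=\int_{-\infty}^\infty G_i(t-s)H_i(\Phi)(s)ds$,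 $F=(F_1,F_2,F_3)$. Upper/lower solutions: a pair $\overline\Phi=(\overline\phi,\overline\varphi,\overline\psi)$, $\underline\Phi=(\underline\phi,\underline\varphi,\underline\psi)\in C^2(\mathbb R,\mathbb R^3)$, with all components and their first and second derivatives bounded, such that for all $t$: $D_1\overline\phi''(t)-c\overline\phi'(t+r_1)+f_{1c}(\overline\phi_{t+r_1},\overline\varphi_{t+r_1},\overline\psi_{t+r_1})\le0$, $D_2\overline\varphi''(t)-c\overline\varphi'(t+r_2)+f_{2c}(\underline\phi_{t+r_2},\overline\varphi_{t+r_2},\underline\psi_{t+r_2})\le0$, $D_3\overline\psi''(t)-c\overline\psi'(t+r_3)+f_{3c}(\overline\phi_{t+r_3},\overline\varphi_{t+r_3},\overline\psi_{t+r_3})\le0$, $D_1\underline\phi''(t)-c\underline\phi'(t+r_1)+f_{1c}(\underline\phi_{t+r_1},\underline\varphi_{t+r_1},\underline\psi_{t+r_1})\ge0$, $D_2\underline\varphi''(t)-c\underline\varphi'(t+r_2)+f_{2c}(\overline\phi_{t+r_2},\underline\varphi_{t+r_2},\overline\psi_{t+r_2})\ge0$, $D_3\underline\psi''(t)-c\underline\psi'(t+r_3)+f_{3c}(\underline\phi_{t+r_3},\underline\varphi_{t+r_3},\underline\psi_{t+r_3})\ge0$. $B_\mu(\mathbb R,\mathbb R^3)=\{\Phi\in C(\mathbb R,\mathbb R^3):|\Phi|_\mu<\infty\}$, $|\Phi|_\mu=\sup_{t}e^{-\mu|t|}|\Phi(t)|$. *)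

From Stdlib Require Import Reals.
From Coquelicot Require Import Coquelicot.
Open Scope R_scope.

Record fn3 := mk3 { p1 : R -> R; p2 : R -> R; p3 : R -> R }.

Definition seg (phi : R -> R) (s : R) : R -> R := fun th => phi (s + th).

Definition cst (a : R) : R -> R := fun _ => a.

Definition Xnorm (sigma : R) (chi : R -> R) : R :=
  real (Lub_Rbar (fun x => exists th, -sigma <= th <= 0 /\ x = Rabs (chi th))).

Definition X3dist (sigma : R) (a1 a2 a3 b1 b2 b3 : R -> R) : R :=
  Rmax (Xnorm sigma (fun th => a1 th - b1 th))
    (Rmax (Xnorm sigma (fun th => a2 th - b2 th))
          (Xnorm sigma (fun th => a3 th - b3 th))).

(* An element of X: represented by a continuous function on R (only its
   restriction to [-sigma,0] matters, see [local3]). *)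
Definition contR (chi : R -> R) : Prop := forall x, continuous chi x.

Definition local3 (sigma : R) (f : (R -> R) -> (R -> R) -> (R -> R) -> R) : Prop :=
  forall a1 a2 a3 b1 b2 b3 : R -> R,
    (forall th, -sigma <= th <= 0 -> a1 th = b1 th /\ a2 th = b2 th /\ a3 th = b3 th) ->
    f a1 a2 a3 = f b1 b2 b3.

Definition admissible (sigma M1 M2 M3 : R) (a1 a2 a3 : R -> R) : Prop :=
  contR a1 /\ contR a2 /\ contR a3 /\
  forall th, -sigma <= th <= 0 ->
    (0 <= a1 th <= M1) /\ (0 <= a2 th <= M2) /\ (0 <= a3 th <= M3).

Definition leX (sigma : R) (a b : R -> R) : Prop :=
  forall th, -sigma <= th <= 0 -> a th <= b th.

Definition Ffun := (R -> R) -> (R -> R) -> (R -> R) -> R.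

Definition condC1 (k1 k2 k3 : R) (f : Ffun) : Prop :=
  f (cst 0) (cst 0) (cst 0) = 0 /\ f (cst k1) (cst k2) (cst k3) = 0.

Definition condC2 (sigma M1 M2 M3 L : R) (f : Ffun) : Prop :=
  forall a1 a2 a3 b1 b2 b3 : R -> R,
    admissible sigma M1 M2 M3 a1 a2 a3 -> admissible sigma M1 M2 M3 b1 b2 b3 ->
    Rabs (f a1 a2 a3 - f b1 b2 b3) <= L * X3dist sigma a1 a2 a3 b1 b2 b3.

Definition condPQM (sigma M1 M2 M3 beta1 beta2 beta3 : R) (f1 f2 f3 : Ffun) : Prop :=
  forall a1 a2 a3 b1 b2 b3 : R -> R,
    (* (a1,a2,a3) = (phi1,varphi1,psi1), (b1,b2,b3) = (phi2,varphi2,psi2) *)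
    admissible sigma M1 M2 M3 a1 a2 a3 -> admissible sigma M1 M2 M3 b1 b2 b3 ->
    leX sigma b1 a1 -> leX sigma b2 a2 -> leX sigma b3 a3 ->
    f1 a1 a2 a3 - f1 b1 b2 b3 + beta1 * (a1 0 - b1 0) >= 0 /\
    f2 a1 a2 a3 - f2 a1 b2 a3 + beta2 * (a2 0 - b2 0) >= 0 /\
    f2 a1 a2 a3 <= f2 b1 a2 a3 /\
    f2 a1 a2 a3 <= f2 a1 a2 b3 /\
    f3 a1 a2 a3 - f3 b1 b2 b3 + beta3 * (a3 0 - b3 0) >= 0.

Definition boundedR (u : R -> R) : Prop := exists B, forall t, Rabs (u t) <= B.

Definition conv (G h : R -> R) (t : R) : R :=
  RInt_gen (fun s => G (t - s) * h s) (Rbar_locally m_infty) (Rbar_locally p_infty).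

Definition twice_diff (x : R -> R) : Prop :=
  (forall t, ex_derive x t) /\ (forall t, ex_derive (Derive x) t).

Definition solves (D c r beta : R) (h x : R -> R) : Prop :=
  forall t, D * Derive (Derive x) t - c * Derive x (t + r) - beta * x (t + r) + h t = 0.

Definition kernelG (D c r beta K delta : R) (G : R -> R) : Prop :=
  contR G /\ (forall xi, 0 <= G xi) /\ (forall xi, G xi <= K * exp (- delta * Rabs xi)) /\
  forall h : R -> R, contR h -> boundedR h ->
    (twice_diff (conv G h) /\ boundedR (conv G h) /\ solves D c r beta h (conv G h)) /\
    (forall y, twice_diff y -> boundedR y -> solves D c r beta h y ->
       forall t, y t = conv G h t).

Definition Hop (f : Ffun) (beta r : R) (comp : fn3 -> R -> R) (Phi : fn3) (t : R) : R :=
  f (seg (p1 Phi) (t + r)) (seg (p2 Phi) (t + r)) (seg (p3 Phi) (t + r))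
  + beta * comp Phi (t + r).

Definition Fop (G : R -> R) (f : Ffun) (beta r : R) (comp : fn3 -> R -> R)
  (Phi : fn3) : R -> R := conv G (Hop f beta r comp Phi).

Definition C2bnd (u : R -> R) : Prop :=
  twice_diff u /\ contR (Derive (Derive u)) /\
  boundedR u /\ boundedR (Derive u) /\ boundedR (Derive (Derive u)).

Definition waveop (D c r : R) (f : Ffun) (u : R -> R) (Phi : fn3) (t : R) : R :=
  D * Derive (Derive u) t - c * Derive u (t + r)
  + f (seg (p1 Phi) (t + r)) (seg (p2 Phi) (t + r)) (seg (p3 Phi) (t + r)).

Definition upper_lower (c D1 D2 D3 r1 r2 r3 : R) (f1 f2 f3 : Ffun) (Up Lo : fn3) : Prop :=
  C2bnd (p1 Up) /\ C2bnd (p2 Up) /\ C2bnd (p3 Up) /\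
  C2bnd (p1 Lo) /\ C2bnd (p2 Lo) /\ C2bnd (p3 Lo) /\
  forall t,
    waveop D1 c r1 f1 (p1 Up) Up t <= 0 /\
    waveop D2 c r2 f2 (p2 Up) (mk3 (p1 Lo) (p2 Up) (p3 Lo)) t <= 0 /\
    waveop D3 c r3 f3 (p3 Up) Up t <= 0 /\
    waveop D1 c r1 f1 (p1 Lo) Lo t >= 0 /\
    waveop D2 c r2 f2 (p2 Lo) (mk3 (p1 Up) (p2 Lo) (p3 Up)) t >= 0 /\
    waveop D3 c r3 f3 (p3 Lo) Lo t >= 0.

Definition le3 (A B : fn3) : Prop :=
  forall t, p1 A t <= p1 B t /\ p2 A t <= p2 B t /\ p3 A t <= p3 B t.

Definition cont3 (Phi : fn3) : Prop := contR (p1 Phi) /\ contR (p2 Phi) /\ contR (p3 Phi).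

Definition GammaSet (Lo Up Phi : fn3) : Prop := cont3 Phi /\ le3 Lo Phi /\ le3 Phi Up.

Definition vnorm (a b c : R) : R := Rmax (Rabs a) (Rmax (Rabs b) (Rabs c)).

Definition mu_norm (mu : R) (Phi : fn3) : Rbar :=
  Lub_Rbar (fun x => exists t,
    x = exp (- mu * Rabs t) * vnorm (p1 Phi t) (p2 Phi t) (p3 Phi t)).

Definition sub3 (A B : fn3) : fn3 :=
  mk3 (fun t => p1 A t - p1 B t) (fun t => p2 A t - p2 B t) (fun t => p3 A t - p3 B t).

Definition Bmu (mu : R) (Phi : fn3) : Prop := cont3 Phi /\ is_finite (mu_norm mu Phi).

Definition Fop3 (G1 G2 G3 : R -> R) (f1 f2 f3 : Ffun) (beta1 beta2 beta3 r1 r2 r3 : R)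
  (Phi : fn3) : fn3 :=
  mk3 (Fop G1 f1 beta1 r1 p1 Phi) (Fop G2 f2 beta2 r2 p2 Phi) (Fop G3 f3 beta3 r3 p3 Phi).

(* F_i(Phi) = G_i * H_i(Phi) with G_i >= 0, so F_i is monotone in H_i, and (PQM) makes
   H_1, H_3 monotone in Phi and H_2 monotone for the mixed order (increasing in the second
   component, decreasing in the others).  By the uniqueness part of (G) an upper solution u of
   the i-th equation equals G_i * h with h >= H_i(Up), whence F_i(Up) <= u; symmetrically for
   lower solutions.  The bound G_i(x) <= K_i e^{-delta_i |x|} with
   mu < delta_i yields |F(Psi) - F(Phi)|(t) <= C |Psi - Phi|_mu e^{mu |t|}, hence (ii), and
   makes F(Gamma) uniformly bounded and equicontinuous.  Arzela-Ascoli (diagonal extraction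
   over a countable dense set) then gives locally uniformly convergent subsequences, and for
   uniformly bounded functions the weight e^{-mu |t|} upgrades this to convergence in
   |.|_mu, hence (iii). *)

From Stdlib Require Import Reals.
From Coquelicot Require Import Coquelicot.
From Stdlib Require Import Lra Lia ClassicalEpsilon Classical.
From Stdlib Require Import Arith.Cantor.
Open Scope R_scope.

Local Notation at_minf := (Rbar_locally m_infty).
Local Notation at_pinf := (Rbar_locally p_infty).

Lemma exp_le (x y : R) : x <= y -> exp x <= exp y.
Proof. intros [H|H]. apply Rlt_le, exp_increasing, H. subst; lra. Qed.

Lemma continuous_Rmult (f g : R -> R) x :
  continuous f x -> continuous g x -> continuous (fun y => f y * g y) x.
Proof. apply (@continuous_mult R_UniformSpace R_AbsRing). Qed.
Lemma continuous_Rplus (f g : R -> R) x :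
  continuous f x -> continuous g x -> continuous (fun y => f y + g y) x.
Proof. apply (@continuous_plus R_UniformSpace R_AbsRing R_NormedModule). Qed.
Lemma continuous_Rminus (f g : R -> R) x :
  continuous f x -> continuous g x -> continuous (fun y => f y - g y) x.
Proof. apply (@continuous_minus R_UniformSpace R_AbsRing R_NormedModule). Qed.
Lemma continuous_Rcomp (f g : R -> R) x :
  continuous f x -> continuous g (f x) -> continuous (fun y => g (f y)) x.
Proof. apply (@continuous_comp R_UniformSpace R_UniformSpace R_UniformSpace). Qed.
Lemma continuous_Rconst (c x : R) : continuous (fun _ : R => c) x.
Proof. apply (@continuous_const R_UniformSpace R_UniformSpace). Qed.
Lemma continuous_Rid (x : R) : continuous (fun y : R => y) x.
Proof. apply (@continuous_id R_UniformSpace). Qed.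

Lemma continuity_pt_continuous (f : R -> R) x : continuous f x -> continuity_pt f x.
Proof. intros H. now apply (proj2 (continuity_pt_filterlim f x)). Qed.

Lemma continuous_eps_delta (f : R -> R) x :
  continuous f x <-> forall eps, 0 < eps ->
    exists d, 0 < d /\ forall y, Rabs (y - x) < d -> Rabs (f y - f x) < eps.
Proof.
  split.
  - intros H eps He.
    destruct (proj1 (continuity_pt_locally f x) (continuity_pt_continuous f x H) (mkposreal _ He))
      as [d Hd].
    exists d. split; [apply cond_pos | exact Hd].
  - intros H. apply (proj1 (continuity_pt_filterlim f x)), continuity_pt_locally.
    intros eps. destruct (H eps (cond_pos eps)) as [d [Hd H2]].
    now exists (mkposreal _ Hd).
Qed.

Lemma uniform_continuity_segment (u : R -> R) a b eta : contR u -> 0 < eta ->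
  exists d, 0 < d /\ forall x y, a <= x <= b -> a <= y <= b ->
    Rabs (x - y) < d -> Rabs (u x - u y) < eta.
Proof.
  intros Hu He.
  assert (Hcp : forall x, a <= x <= b -> continuity_pt u x)
    by (intros; apply continuity_pt_continuous, Hu).
  destruct (Heine_cor2 Hcp (mkposreal _ He)) as [d Hd].
  exists d. split; [apply cond_pos | exact Hd].
Qed.

Lemma contR_shift (u : R -> R) r : contR u -> contR (fun t => u (t + r)).
Proof.
  intros Hu x. apply (continuous_Rcomp (fun t => t + r) u); [|apply Hu].
  apply continuous_Rplus; [apply continuous_Rid | apply continuous_Rconst].
Qed.

Lemma contR_seg (u : R -> R) s : contR u -> contR (seg u s).
Proof.
  intros Hu x. apply (continuous_Rcomp (fun th => s + th) u); [|apply Hu].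
  apply continuous_Rplus; [apply continuous_Rconst | apply continuous_Rid].
Qed.

Lemma contR_cst a : contR (cst a).
Proof. intros x. apply continuous_Rconst. Qed.

Lemma contR_exp_abs (a t c : R) : contR (fun s => c * exp (- a * Rabs (t - s))).
Proof.
  intros z. apply continuous_Rmult; [apply continuous_Rconst|].
  apply (continuous_Rcomp (fun s => - a * Rabs (t - s)) exp); [| apply continuous_exp].
  apply continuous_Rmult; [apply continuous_Rconst|].
  apply (continuous_Rcomp (fun s => t - s) Rabs); [| apply continuous_Rabs].
  apply continuous_Rminus; [apply continuous_Rconst | apply continuous_Rid].
Qed.

(** * Improper integrals over the real line *)

Lemma filterlim_at_point (f : R -> R) (t : R) : filterlim f (at_point t) (locally (f t)).
Proof. intros P HP. unfold filtermap, at_point. now apply locally_singleton. Qed.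

Lemma exp_tail_minf (a t : R) : 0 < a ->
  filterlim (fun s => exp (a * (s - t)) / a) at_minf (locally 0).
Proof.
  intros Ha. apply filterlim_locally. intros eps. simpl.
  exists (t + ln (eps * a) / a). intros x Hx. change (Rabs (exp (a * (x - t)) / a - 0) < eps).
  rewrite Rminus_0_r, Rabs_pos_eq.
  2:{ apply Rle_mult_inv_pos; [apply Rlt_le, exp_pos | lra]. }
  assert (Hea : 0 < eps * a) by (apply Rmult_lt_0_compat; [apply cond_pos|lra]).
  apply Rmult_lt_reg_r with a; [lra|]. unfold Rdiv. rewrite Rmult_assoc, Rinv_l, Rmult_1_r by lra.
  rewrite <- (exp_ln (eps * a)) by lra.
  apply exp_increasing.
  apply Rmult_lt_compat_l with (r := a) in Hx; [|lra].
  replace (a * (t + ln (eps * a) / a)) with (a * t + ln (eps * a)) in Hx by (field; lra).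
  lra.
Qed.

Lemma exp_tail_pinf (a t : R) : 0 < a ->
  filterlim (fun s => - (exp (- a * (s - t)) / a)) at_pinf (locally 0).
Proof.
  intros Ha. apply filterlim_locally. intros eps. simpl.
  exists (t - ln (eps * a) / a). intros x Hx.
  change (Rabs (- (exp (- a * (x - t)) / a) - 0) < eps).
  rewrite Rminus_0_r, Rabs_Ropp, Rabs_pos_eq.
  2:{ apply Rle_mult_inv_pos; [apply Rlt_le, exp_pos | lra]. }
  assert (Hea : 0 < eps * a) by (apply Rmult_lt_0_compat; [apply cond_pos|lra]).
  apply Rmult_lt_reg_r with a; [lra|]. unfold Rdiv. rewrite Rmult_assoc, Rinv_l, Rmult_1_r by lra.
  rewrite <- (exp_ln (eps * a)) by lra.
  apply exp_increasing.
  apply Rmult_lt_compat_l with (r := a) in Hx; [|lra].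
  replace (a * (t - ln (eps * a) / a)) with (a * t - ln (eps * a)) in Hx by (field; lra).
  lra.
Qed.

Lemma is_RInt_gen_exp_abs_left (a t : R) : 0 < a ->
  is_RInt_gen (fun s => exp (- a * Rabs (t - s))) at_minf (at_point t) (1 / a).
Proof.
  intros Ha. set (F := fun s => exp (a * (s - t)) / a).
  assert (HD : forall x, is_derive F x (exp (a * (x - t)))).
  { intros x. unfold F. auto_derive; auto. unfold Rminus. field. lra. }
  replace (1 / a) with (F t - 0) by (unfold F; rewrite Rminus_diag, Rmult_0_r, exp_0; lra).
  eapply is_RInt_gen_ext; [| apply (is_RInt_gen_Derive (Fa := at_minf) (Fb := at_point t) F)].
  - exists (fun s => s < t) (fun b => b = t); [now exists t | reflexivity |].
    intros x y Hx Hy z. simpl. subst y. rewrite Rmin_left, Rmax_right by lra.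
    intros [H1 H2]. rewrite (is_derive_unique _ _ _ (HD z)).
    f_equal. rewrite Rabs_pos_eq by lra. ring.
  - exists (fun _ => True) (fun _ => True); try apply filter_true.
    intros; eexists; apply HD.
  - exists (fun _ => True) (fun _ => True); try apply filter_true.
    intros x y _ _ z _.
    apply (continuous_ext (T:=R_UniformSpace) (U:=R_UniformSpace) (fun w => exp (a * (w - t)))).
    { intros w. symmetry. apply is_derive_unique, HD. }
    apply (@ex_derive_continuous R_AbsRing R_NormedModule). auto_derive. auto.
  - now apply exp_tail_minf.
  - apply filterlim_at_point.
Qed.

Lemma is_RInt_gen_exp_abs_right (a t : R) : 0 < a ->
  is_RInt_gen (fun s => exp (- a * Rabs (t - s))) (at_point t) at_pinf (1 / a).
Proof.
  intros Ha. set (F := fun s => - (exp (- a * (s - t)) / a)).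
  assert (HD : forall x, is_derive F x (exp (- a * (x - t)))).
  { intros x. unfold F. auto_derive; auto. unfold Rminus. field. lra. }
  replace (1 / a) with (0 - F t) by (unfold F; rewrite Rminus_diag, Rmult_0_r, exp_0; lra).
  eapply is_RInt_gen_ext; [| apply (is_RInt_gen_Derive (Fa := at_point t) (Fb := at_pinf) F)].
  - exists (fun b => b = t) (fun s => t < s); [reflexivity | now exists t |].
    intros x y Hx Hy z. simpl. subst x. rewrite Rmin_left, Rmax_right by lra.
    intros [H1 H2]. rewrite (is_derive_unique _ _ _ (HD z)).
    f_equal. rewrite Rabs_left by lra. ring.
  - exists (fun _ => True) (fun _ => True); try apply filter_true.
    intros; eexists; apply HD.
  - exists (fun _ => True) (fun _ => True); try apply filter_true.
    intros x y _ _ z _.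
    apply (continuous_ext (T:=R_UniformSpace) (U:=R_UniformSpace) (fun w => exp (- a * (w - t)))).
    { intros w. symmetry. apply is_derive_unique, HD. }
    apply (@ex_derive_continuous R_AbsRing R_NormedModule). auto_derive. auto.
  - apply filterlim_at_point.
  - now apply exp_tail_pinf.
Qed.

Lemma is_RInt_gen_exp_abs (a t : R) : 0 < a ->
  is_RInt_gen (fun s => exp (- a * Rabs (t - s))) at_minf at_pinf (2 / a).
Proof.
  intros Ha.
  replace (2 / a) with (plus (1 / a) (1 / a)) by (unfold plus; simpl; field; lra).
  apply (@is_RInt_gen_Chasles R_NormedModule _ _ _ _ _ t);
    [apply is_RInt_gen_exp_abs_left | apply is_RInt_gen_exp_abs_right]; exact Ha.
Qed.

Lemma ex_RInt_contR (f : R -> R) a b : contR f -> ex_RInt f a b.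
Proof. intros Hf. apply (@ex_RInt_continuous R_CompleteNormedModule). intros; apply Hf. Qed.

Lemma RInt_diff_ends (f : R -> R) a a' b b' : contR f ->
  RInt f a b - RInt f a' b' = RInt f a a' + RInt f b' b.
Proof.
  intros Hf.
  assert (C1 := RInt_Chasles f a a' b' (ex_RInt_contR f _ _ Hf) (ex_RInt_contR f _ _ Hf)).
  assert (C2 := RInt_Chasles f a b' b (ex_RInt_contR f _ _ Hf) (ex_RInt_contR f _ _ Hf)).
  change (RInt f a a' + RInt f a' b' = RInt f a b') in C1.
  change (RInt f a b' + RInt f b' b = RInt f a b) in C2. lra.
Qed.

Lemma abs_RInt_le_dominated (f g : R -> R) (x y : R) : contR f -> contR g ->
  (forall z, Rabs (f z) <= g z) -> Rabs (RInt f x y) <= Rabs (RInt g x y).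
Proof.
  intros Hf Hg Hd.
  assert (K : forall a b, a <= b -> Rabs (RInt f a b) <= RInt g a b).
  { intros a b Hab. eapply Rle_trans; [apply abs_RInt_le; [auto | now apply ex_RInt_contR]|].
    apply RInt_le; [auto | apply (ex_RInt_norm f); now apply ex_RInt_contR |
      now apply ex_RInt_contR | intros; apply Hd]. }
  destruct (Rle_dec x y) as [H|H].
  - eapply Rle_trans; [apply K; auto | apply Rle_abs].
  - rewrite <- (opp_RInt_swap f), <- (opp_RInt_swap g) by now apply ex_RInt_contR.
    change (Rabs (- RInt f y x) <= Rabs (- RInt g y x)).
    rewrite !Rabs_Ropp. eapply Rle_trans; [apply K; lra | apply Rle_abs].
Qed.

(* Cauchy criterion: the tails of the integral of [f] are bounded by those of [g]. *)
Lemma ex_RInt_gen_dominated (f g : R -> R) (lg : R) : contR f -> contR g ->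
  (forall z, Rabs (f z) <= g z) -> is_RInt_gen g at_minf at_pinf lg ->
  ex_RInt_gen f at_minf at_pinf.
Proof.
  intros Hf Hg Hd Hig.
  assert (Hc : exists l, filterlim (fun ab : R * R => RInt f (fst ab) (snd ab))
                 (filter_prod at_minf at_pinf) (locally l)).
  { apply (@filterlim_locally_cauchy _ R_CompleteSpace).
    { apply filter_prod_proper; apply Rbar_locally_filter. }
    intros eps.
    assert (He : 0 < eps / 4) by (generalize (cond_pos eps); lra).
    destruct (Hig (ball lg (mkposreal _ He)) (locally_ball _ _)) as [Pa Pb [Ma HMa] [Mb HMb] HP].
    assert (Hg4 : forall u v, u < Rmin Ma Mb -> Rmax Ma Mb < v -> Rabs (RInt g u v - lg) < eps / 4).
    { intros u v Hu Hv.
      destruct (HP u v) as [z [Hz1 Hz2]];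
        [apply HMa; eapply Rlt_le_trans; [exact Hu | apply Rmin_l]
        |apply HMb; eapply Rle_lt_trans; [apply Rmax_r | exact Hv]|].
      simpl in Hz1. rewrite (is_RInt_unique _ _ _ _ Hz1). apply Hz2. }
    exists (fun ab : R * R => fst ab < Rmin Ma Mb /\ Rmax Ma Mb < snd ab). split.
    { exists (fun a => a < Rmin Ma Mb) (fun b => Rmax Ma Mb < b);
        [now exists (Rmin Ma Mb) | now exists (Rmax Ma Mb) | intros; simpl; auto]. }
    intros [a b] [a' b'] [Ha Hb] [Ha' Hb']. simpl in *.
    change (Rabs (RInt f a' b' - RInt f a b) < eps).
    rewrite <- Rabs_Ropp, Ropp_minus_distr, RInt_diff_ends by exact Hf.
    assert (E1 := RInt_diff_ends g a a' b b Hg).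
    assert (E2 := RInt_diff_ends g a a b b' Hg).
    rewrite RInt_point in E1, E2. change (@zero _) with 0 in E1, E2.
    assert (D1 := abs_RInt_le_dominated f g a a' Hf Hg Hd).
    assert (D2 := abs_RInt_le_dominated f g b' b Hf Hg Hd).
    assert (G1 := Hg4 a b Ha Hb). assert (G2 := Hg4 a' b Ha' Hb). assert (G3 := Hg4 a b' Ha Hb').
    eapply Rle_lt_trans; [apply Rabs_triang|].
    apply Rabs_def2 in G1. apply Rabs_def2 in G2. apply Rabs_def2 in G3.
    assert (Rabs (RInt g a a') < eps / 2) by (apply Rabs_def1; lra).
    assert (Rabs (RInt g b' b) < eps / 2) by (apply Rabs_def1; lra).
    lra. }
  destruct Hc as [l Hl]. exists l.
  intros P HP. specialize (Hl P HP). unfold filtermapi.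
  eapply filter_imp; [| exact Hl]. intros [a b] H. simpl in *.
  exists (RInt f a b). split; auto.
  apply (@RInt_correct R_CompleteNormedModule). now apply ex_RInt_contR.
Qed.

Lemma is_RInt_gen_Rscal (f : R -> R) c l : is_RInt_gen f at_minf at_pinf l ->
  is_RInt_gen (fun x => c * f x) at_minf at_pinf (c * l).
Proof.
  intros H. apply (@is_RInt_gen_scal R_NormedModule);
    try apply Proper_StrongProper; try apply Rbar_locally_filter; auto.
Qed.

Lemma is_RInt_gen_Rminus (f g : R -> R) lf lg :
  is_RInt_gen f at_minf at_pinf lf -> is_RInt_gen g at_minf at_pinf lg ->
  is_RInt_gen (fun x => f x - g x) at_minf at_pinf (lf - lg).
Proof.
  intros H1 H2. apply (@is_RInt_gen_minus R_NormedModule);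
    try apply Proper_StrongProper; try apply Rbar_locally_filter; auto.
Qed.

Lemma is_RInt_gen_Rext (f g : R -> R) l : (forall x, f x = g x) ->
  is_RInt_gen f at_minf at_pinf l -> is_RInt_gen g at_minf at_pinf l.
Proof.
  intros E H. apply (@is_RInt_gen_ext R_NormedModule at_minf at_pinf) with f;
    try apply Rbar_locally_filter; auto.
  apply filter_forall. intros; apply E.
Qed.

Lemma RInt_gen_Runique (f : R -> R) l :
  is_RInt_gen f at_minf at_pinf l -> RInt_gen f at_minf at_pinf = l.
Proof.
  intros H. apply (@is_RInt_gen_unique R_CompleteNormedModule);
    try apply Proper_StrongProper; try apply Rbar_locally_filter; auto.
Qed.

Lemma is_RInt_gen_abs_le (f g : R -> R) lf lg : (forall x, Rabs (f x) <= g x) ->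
  is_RInt_gen f at_minf at_pinf lf -> is_RInt_gen g at_minf at_pinf lg -> Rabs lf <= lg.
Proof.
  intros Hd H1 H2.
  apply (RInt_gen_norm (V := R_CompleteNormedModule) (Fa := at_minf) (Fb := at_pinf) f g lf lg);
    auto.
  - exists (fun x => x < 0) (fun y => 0 < y); [now exists 0 | now exists 0 | intros; simpl; lra].
  - apply filter_forall. intros; apply Hd.
Qed.

Lemma is_RInt_gen_ge0 (f : R -> R) l : (forall x, 0 <= f x) ->
  is_RInt_gen f at_minf at_pinf l -> 0 <= l.
Proof.
  intros Hp H. assert (Rabs l <= l).
  { apply (is_RInt_gen_abs_le f f); auto. intros x. rewrite Rabs_pos_eq; auto. lra. }
  generalize (Rle_abs l) (Rabs_pos l). lra.
Qed.

Lemma exp_decay_eventually (Q c eps : R) : 0 <= Q -> 0 < c -> 0 < eps ->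
  exists S, 0 <= S /\ forall u, S <= u -> Q * exp (- c * u) <= eps.
Proof.
  intros HQ Hc He.
  assert (Hq : 0 < (Q + eps) / eps) by (apply Rdiv_lt_0_compat; lra).
  exists (Rmax 0 (ln ((Q + eps) / eps) / c)). split; [apply Rmax_l|]. intros u Hu.
  assert (Hln : ln ((Q + eps) / eps) <= c * u).
  { apply Rmult_le_reg_r with (/ c); [apply Rinv_0_lt_compat; lra|].
    replace (c * u * / c) with u by (field; lra). eapply Rle_trans; [apply Rmax_r | exact Hu]. }
  apply exp_le in Hln. rewrite exp_ln in Hln by exact Hq.
  replace (- c * u) with (- (c * u)) by ring. rewrite exp_Ropp.
  assert (P := exp_pos (c * u)).
  apply (Rmult_le_reg_r (exp (c * u))); [exact P|].
  rewrite Rmult_assoc, Rinv_l, Rmult_1_r by lra.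
  apply Rmult_le_compat_l with (r := eps) in Hln; [|lra].
  replace (eps * ((Q + eps) / eps)) with (Q + eps) in Hln by (field; lra). lra.
Qed.

(** * Convolution with an exponentially decaying kernel *)

Definition exp_kernel (G : R -> R) (K d : R) : Prop :=
  contR G /\ (forall xi, 0 <= G xi) /\ (forall xi, G xi <= K * exp (- d * Rabs xi)).

Section Convolution.
Variables (G : R -> R) (K d : R).
Hypotheses (Hd : 0 < d) (HG : exp_kernel G K d).

Lemma is_RInt_gen_conv (h : R -> R) B t : contR h -> (forall s, Rabs (h s) <= B) ->
  is_RInt_gen (fun s => G (t - s) * h s) at_minf at_pinf (conv G h t).
Proof.
  intros Hh HB. destruct HG as [HGc [HG0 HGK]].
  assert (Ex : ex_RInt_gen (fun s => G (t - s) * h s) at_minf at_pinf).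
  { assert (Hc : contR (fun s => G (t - s) * h s)).
    { intros z. apply continuous_Rmult; [|apply Hh].
      apply (continuous_Rcomp (fun s => t - s) G); [|apply HGc].
      apply continuous_Rminus; [apply continuous_Rconst | apply continuous_Rid]. }
    refine (ex_RInt_gen_dominated _ _ _ Hc (contR_exp_abs d t (K * B)) _
      (is_RInt_gen_Rscal _ (K * B) _ (is_RInt_gen_exp_abs d t Hd))).
    intros z. rewrite Rabs_mult, (Rabs_pos_eq (G _)) by auto.
    replace (K * B * exp (- d * Rabs (t - z))) with ((K * exp (- d * Rabs (t - z))) * B) by ring.
    apply Rmult_le_compat; auto. apply Rabs_pos. }
  apply (@RInt_gen_correct R_CompleteNormedModule);
    try apply Proper_StrongProper; try apply Rbar_locally_filter; auto.
Qed.

Lemma conv_le (h1 h2 : R -> R) B1 B2 t : contR h1 -> contR h2 ->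
  (forall s, Rabs (h1 s) <= B1) -> (forall s, Rabs (h2 s) <= B2) ->
  (forall s, h1 s <= h2 s) -> conv G h1 t <= conv G h2 t.
Proof.
  intros H1 H2 HB1 HB2 Hle.
  assert (I := is_RInt_gen_Rminus _ _ _ _
    (is_RInt_gen_conv h2 B2 t H2 HB2) (is_RInt_gen_conv h1 B1 t H1 HB1)).
  apply is_RInt_gen_ge0 in I; [lra|]. intros x. destruct HG as [_ [HG0 _]].
  rewrite <- Rmult_minus_distr_l. apply Rmult_le_pos; auto. specialize (Hle x); lra.
Qed.

Lemma conv_minus (h1 h2 : R -> R) B1 B2 t : contR h1 -> contR h2 ->
  (forall s, Rabs (h1 s) <= B1) -> (forall s, Rabs (h2 s) <= B2) ->
  conv G (fun s => h1 s - h2 s) t = conv G h1 t - conv G h2 t.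
Proof.
  intros H1 H2 HB1 HB2. apply RInt_gen_Runique.
  eapply is_RInt_gen_Rext;
    [| exact (is_RInt_gen_Rminus _ _ _ _ (is_RInt_gen_conv h1 B1 t H1 HB1)
               (is_RInt_gen_conv h2 B2 t H2 HB2))].
  intros; simpl; ring.
Qed.

(* The bound [|h s| <= A e^{mu|s|}] is turned into [|G * h| (t) <= C A e^{mu|t|}] through
   [e^{mu|s|} <= e^{mu|t|} e^{mu|t-s|}], which is integrable against [G] since [mu < d]. *)
Lemma conv_weighted_bound (h : R -> R) B mu A t : 0 < mu -> mu < d -> contR h ->
  (forall s, Rabs (h s) <= B) -> 0 <= A -> (forall s, Rabs (h s) <= A * exp (mu * Rabs s)) ->
  Rabs (conv G h t) <= A * K * exp (mu * Rabs t) * (2 / (d - mu)).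
Proof.
  intros Hmu Hmd Hh HB HA HAs.
  refine (is_RInt_gen_abs_le _ _ _ _ _ (is_RInt_gen_conv h B t Hh HB)
    (is_RInt_gen_Rscal _ (A * K * exp (mu * Rabs t)) _ (is_RInt_gen_exp_abs (d - mu) t ltac:(lra)))).
  intros s. destruct HG as [_ [HG0 HGK]].
  assert (HK : 0 <= K).
  { specialize (HG0 0). specialize (HGK 0). assert (0 < exp (- d * Rabs 0)) by apply exp_pos. nra. }
  rewrite Rabs_mult, (Rabs_pos_eq (G _)) by auto.
  eapply Rle_trans; [apply Rmult_le_compat; [auto | apply Rabs_pos | apply HGK | apply HAs]|].
  replace (K * exp (- d * Rabs (t - s)) * (A * exp (mu * Rabs s))) with
     (A * K * exp (- d * Rabs (t - s) + mu * Rabs s)) by (rewrite exp_plus; ring).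
  replace (A * K * exp (mu * Rabs t) * exp (- (d - mu) * Rabs (t - s))) with
    (A * K * exp (mu * Rabs t + - (d - mu) * Rabs (t - s))) by (rewrite exp_plus; ring).
  apply Rmult_le_compat_l; [apply Rmult_le_pos; auto|].
  apply exp_le.
  assert (Rabs s <= Rabs t + Rabs (t - s)).
  { replace s with (t - (t - s)) at 1 by ring. eapply Rle_trans; [apply Rabs_triang|].
    rewrite Rabs_Ropp. lra. }
  nra.
Qed.

(* Uniform continuity of [G] on a compact interval plus the decay of [G] outside it. *)
Lemma exp_kernel_modulus : 0 < K -> forall eta, 0 < eta -> exists del, 0 < del /\
  forall u u', Rabs (u - u') < del -> Rabs (G u - G u') <= eta * exp (- (d / 2) * Rabs u).
Proof.
  intros HK eta Heta. destruct HG as [HGc [HG0 HGK]].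
  destruct (exp_decay_eventually (2 * K * exp d) (d / 2) eta) as [S [HS0 HS]];
    [generalize (exp_pos d); nra | lra | exact Heta|].
  destruct (uniform_continuity_segment G (- (S + 1)) (S + 1) (eta * exp (- (d / 2) * S)) HGc)
    as [del0 [Hdel0 Hu]]; [apply Rmult_lt_0_compat; [exact Heta | apply exp_pos]|].
  exists (Rmin 1 del0). split; [apply Rmin_pos; lra|].
  intros u u' Huu.
  assert (H1 : Rabs (u - u') < 1) by (eapply Rlt_le_trans; [exact Huu | apply Rmin_l]).
  assert (Hu' : Rabs u - 1 <= Rabs u' <= Rabs u + 1).
  { replace u' with (u - (u - u')) by ring. split.
    - generalize (Rabs_triang (u - (u - u')) (u - u')). replace (u - (u - u') + (u - u')) with u by ring. lra.
    - eapply Rle_trans; [apply Rabs_triang|]. rewrite Rabs_Ropp. lra. }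
  destruct (Rle_dec (Rabs u) S) as [Hle|Hgt].
  - apply Rlt_le. eapply Rlt_le_trans.
    + apply Hu; try (apply Rabs_le_between; lra).
      eapply Rlt_le_trans; [exact Huu | apply Rmin_r].
    + apply Rmult_le_compat_l; [lra|]. apply exp_le. nra.
  - assert (E1 : exp (- d * Rabs u') <= exp d * exp (- d * Rabs u))
      by (rewrite <- exp_plus; apply exp_le; nra).
    assert (E2 : exp (- d * Rabs u) <= exp d * exp (- d * Rabs u))
      by (rewrite <- exp_plus; apply exp_le; lra).
    assert (E3 : exp (- d * Rabs u) = exp (- (d / 2) * Rabs u) * exp (- (d / 2) * Rabs u))
      by (rewrite <- exp_plus; f_equal; field).
    assert (E4 := HS (Rabs u) ltac:(lra)).
    assert (Rabs (G u - G u') <= G u + G u')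
      by (generalize (HG0 u) (HG0 u'); intros; apply Rabs_le; lra).
    generalize (HGK u) (HGK u') (exp_pos (- (d / 2) * Rabs u)). intros G1 G2 P1.
    assert (G u + G u' <= 2 * K * exp d * exp (- (d / 2) * Rabs u) * exp (- (d / 2) * Rabs u))
      by (rewrite Rmult_assoc, <- E3; nra).
    nra.
Qed.

Lemma conv_equicontinuous B : 0 < K -> 0 <= B -> forall eps, 0 < eps -> exists del, 0 < del /\
  forall h, contR h -> (forall s, Rabs (h s) <= B) ->
    forall t t', Rabs (t - t') < del -> Rabs (conv G h t - conv G h t') <= eps.
Proof.
  intros HK HB eps He.
  set (eta := eps * (d / 2) / (2 * (B + 1))).
  assert (Heta : 0 < eta) by (unfold eta; apply Rmult_lt_0_compat; [nra | apply Rinv_0_lt_compat; lra]).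
  destruct (exp_kernel_modulus HK eta Heta) as [del [Hdel Hmod]].
  exists del. split; [exact Hdel|]. intros h Hh HBh t t' Htt.
  eapply Rle_trans.
  - refine (is_RInt_gen_abs_le _ _ _ _ _
      (is_RInt_gen_Rminus _ _ _ _ (is_RInt_gen_conv h B t Hh HBh) (is_RInt_gen_conv h B t' Hh HBh))
      (is_RInt_gen_Rscal _ (B * eta) _ (is_RInt_gen_exp_abs (d / 2) t ltac:(lra)))).
    intros s. rewrite <- Rmult_minus_distr_r, Rabs_mult.
    replace (B * eta * exp (- (d / 2) * Rabs (t - s))) with
      ((eta * exp (- (d / 2) * Rabs (t - s))) * B) by ring.
    apply Rmult_le_compat; [apply Rabs_pos | apply Rabs_pos | | apply HBh].
    apply Hmod. replace (t - s - (t' - s)) with (t - t') by ring. exact Htt.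
  - unfold eta. replace (B * (eps * (d / 2) / (2 * (B + 1))) * (2 / (d / 2))) with
      (eps * (B / (B + 1))) by (field; lra).
    assert (B / (B + 1) <= 1).
    { apply Rmult_le_reg_r with (B + 1); [lra|]. field_simplify; lra. }
    nra.
Qed.

End Convolution.

Lemma kernelG_exp_kernel D c r beta K d G : kernelG D c r beta K d G -> exp_kernel G K d.
Proof. intros [H1 [H2 [H3 _]]]. repeat split; auto. Qed.

Lemma kernelG_conv_contR D c r beta K d G h : kernelG D c r beta K d G ->
  contR h -> boundedR h -> contR (conv G h).
Proof.
  intros [_ [_ [_ Hk]]] Hc Hb x. destruct (Hk h Hc Hb) as [[[Hd _] _] _].
  apply (@ex_derive_continuous R_AbsRing R_NormedModule). apply Hd.
Qed.

Lemma C2bnd_contR (u : R -> R) : C2bnd u -> contR u /\ contR (Derive u).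
Proof.
  intros [[H1 H2] _]. split; intros x; apply (@ex_derive_continuous R_AbsRing R_NormedModule);
    [apply H1 | apply H2].
Qed.

Lemma boundedR_abs (u : R -> R) : boundedR u -> exists B, 0 <= B /\ forall t, Rabs (u t) <= B.
Proof. intros [B HB]. exists B. split; [eapply Rle_trans; [apply Rabs_pos | apply (HB 0)] | exact HB]. Qed.

(* The source term [h] for which [u] solves [D u'' - c u'(. + r) - beta u(. + r) + h = 0]. *)
Definition wave_source (D c r beta : R) (u : R -> R) (t : R) : R :=
  beta * u (t + r) + c * Derive u (t + r) - D * Derive (Derive u) t.

Lemma wave_source_contR D c r beta u : C2bnd u -> contR (wave_source D c r beta u).
Proof.
  intros HC. destruct (C2bnd_contR u HC) as [C0 C1]. destruct HC as [_ [C2 _]].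
  intros x. unfold wave_source.
  apply continuous_Rminus; [apply continuous_Rplus|];
    apply continuous_Rmult; try apply continuous_Rconst;
    [apply (contR_shift _ r C0) | apply (contR_shift _ r C1) | apply C2].
Qed.

Lemma wave_source_bounded D c r beta u : C2bnd u ->
  exists B, forall t, Rabs (wave_source D c r beta u t) <= B.
Proof.
  intros [_ [_ [B0 [B1 B2]]]].
  destruct (boundedR_abs _ B0) as [b0 [_ Hb0]]. destruct (boundedR_abs _ B1) as [b1 [_ Hb1]].
  destruct (boundedR_abs _ B2) as [b2 [_ Hb2]].
  exists (Rabs beta * b0 + Rabs c * b1 + Rabs D * b2). intros t. unfold wave_source.
  eapply Rle_trans; [apply Rabs_triang|]. rewrite Rabs_Ropp.
  eapply Rle_trans; [apply Rplus_le_compat_r, Rabs_triang|]. rewrite !Rabs_mult.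
  apply Rplus_le_compat; [apply Rplus_le_compat|];
    apply Rmult_le_compat_l; auto; apply Rabs_pos.
Qed.

(* The uniqueness part of (G). *)
Lemma C2bnd_conv_wave_source D c r beta K d G u : kernelG D c r beta K d G -> C2bnd u ->
  forall t, u t = conv G (wave_source D c r beta u) t.
Proof.
  intros [_ [_ [_ Hk]]] HC.
  destruct (wave_source_bounded D c r beta u HC) as [B HB].
  apply (proj2 (Hk _ (wave_source_contR D c r beta u HC) (ex_intro _ B HB))).
  - exact (proj1 HC).
  - exact (proj1 (proj2 (proj2 HC))).
  - intros t. unfold wave_source. ring.
Qed.

Section OrderedSolutions.
Variables (D c r beta K d : R) (G : R -> R) (u h w : R -> R) (B : R).
Hypotheses (Hd : 0 < d) (HG : kernelG D c r beta K d G) (Hu : C2bnd u)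
  (Hh : contR h) (HB : forall t, Rabs (h t) <= B) (Eh : forall t, h t = w t + beta * u (t + r)).

Lemma lower_solution_le_conv :
  (forall t, D * Derive (Derive u) t - c * Derive u (t + r) + w t >= 0) ->
  forall t, u t <= conv G h t.
Proof.
  intros Hw t. rewrite (C2bnd_conv_wave_source D c r beta K d G u HG Hu t).
  destruct (wave_source_bounded D c r beta u Hu) as [Bq HBq].
  apply (conv_le G K d Hd (kernelG_exp_kernel _ _ _ _ _ _ _ HG) _ _ Bq B t
    (wave_source_contR D c r beta u Hu) Hh HBq HB).
  intros s. rewrite Eh. unfold wave_source. specialize (Hw s). lra.
Qed.

Lemma conv_le_upper_solution :
  (forall t, D * Derive (Derive u) t - c * Derive u (t + r) + w t <= 0) ->
  forall t, conv G h t <= u t.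
Proof.
  intros Hw t. rewrite (C2bnd_conv_wave_source D c r beta K d G u HG Hu t).
  destruct (wave_source_bounded D c r beta u Hu) as [Bq HBq].
  apply (conv_le G K d Hd (kernelG_exp_kernel _ _ _ _ _ _ _ HG) _ _ B Bq t
    Hh (wave_source_contR D c r beta u Hu) HB HBq).
  intros s. rewrite Eh. unfold wave_source. specialize (Hw s). lra.
Qed.

End OrderedSolutions.

Definition vnorm3 (A : fn3) (t : R) : R := vnorm (p1 A t) (p2 A t) (p3 A t).

Definition box_max (M1 M2 M3 : R) : R := Rmax M1 (Rmax M2 M3).

Definition in_box (M1 M2 M3 : R) (Phi : fn3) : Prop :=
  cont3 Phi /\ forall t, (0 <= p1 Phi t <= M1) /\ (0 <= p2 Phi t <= M2) /\ (0 <= p3 Phi t <= M3).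

Definition projection (comp : fn3 -> R -> R) : Prop := comp = p1 \/ comp = p2 \/ comp = p3.

Lemma vnorm_ge a b c : Rabs a <= vnorm a b c /\ Rabs b <= vnorm a b c /\ Rabs c <= vnorm a b c.
Proof.
  unfold vnorm. repeat split; [apply Rmax_l | |].
  - eapply Rle_trans; [apply Rmax_l | apply Rmax_r].
  - eapply Rle_trans; [apply Rmax_r | apply Rmax_r].
Qed.

Lemma vnorm_le a b c e : Rabs a <= e -> Rabs b <= e -> Rabs c <= e -> vnorm a b c <= e.
Proof. intros. unfold vnorm. repeat apply Rmax_lub; auto. Qed.

Lemma vnorm_scaled_le k a b c e :
  k * Rabs a <= e -> k * Rabs b <= e -> k * Rabs c <= e -> k * vnorm a b c <= e.
Proof.
  intros. unfold vnorm, Rmax.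
  destruct (Rle_dec (Rabs b) (Rabs c)); destruct (Rle_dec (Rabs a) _); auto.
Qed.

Lemma box_max_ge M1 M2 M3 : M1 <= box_max M1 M2 M3 /\ M2 <= box_max M1 M2 M3 /\ M3 <= box_max M1 M2 M3.
Proof.
  unfold box_max. repeat split; [apply Rmax_l | |].
  - eapply Rle_trans; [apply Rmax_l | apply Rmax_r].
  - eapply Rle_trans; [apply Rmax_r | apply Rmax_r].
Qed.

Lemma in_box_vnorm3 M1 M2 M3 Phi : in_box M1 M2 M3 Phi -> forall t, vnorm3 Phi t <= box_max M1 M2 M3.
Proof.
  intros [_ HB] t. destruct (box_max_ge M1 M2 M3) as [A1 [A2 A3]].
  destruct (HB t) as [B1 [B2 B3]].
  apply vnorm_le; rewrite Rabs_pos_eq; lra.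
Qed.

Lemma in_box_mix M1 M2 M3 A B C : in_box M1 M2 M3 A -> in_box M1 M2 M3 B -> in_box M1 M2 M3 C ->
  in_box M1 M2 M3 (mk3 (p1 A) (p2 B) (p3 C)).
Proof.
  intros [[A1 _] HA] [[_ [B2 _]] HB] [[_ [_ C3]] HC]. split; [split; [|split]; auto|].
  intros t. simpl. destruct (HA t) as [? _]. destruct (HB t) as [_ [? _]].
  destruct (HC t) as [_ [_ ?]]. auto.
Qed.

Lemma projection_p1 : projection p1. Proof. now left. Qed.
Lemma projection_p2 : projection p2. Proof. now right; left. Qed.
Lemma projection_p3 : projection p3. Proof. now right; right. Qed.

Lemma projection_contR comp Phi : projection comp -> cont3 Phi -> contR (comp Phi).
Proof. intros [->|[->| ->]] [H1 [H2 H3]]; assumption. Qed.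

Lemma projection_abs_le comp Phi t : projection comp -> Rabs (comp Phi t) <= vnorm3 Phi t.
Proof.
  intros Hp. destruct (vnorm_ge (p1 Phi t) (p2 Phi t) (p3 Phi t)) as [V1 [V2 V3]].
  destruct Hp as [->|[->| ->]]; assumption.
Qed.

Lemma projection_sub3 comp A B t : projection comp -> comp (sub3 A B) t = comp A t - comp B t.
Proof. intros [->|[->| ->]]; reflexivity. Qed.

Lemma Xnorm_le sigma chi e : 0 <= e ->
  (forall th, -sigma <= th <= 0 -> Rabs (chi th) <= e) -> Xnorm sigma chi <= e.
Proof.
  intros He H. unfold Xnorm.
  destruct (Lub_Rbar_correct (fun x => exists th, -sigma <= th <= 0 /\ x = Rabs (chi th)))
    as [_ Hlub].
  assert (Hb : Rbar_le (Lub_Rbar (fun x => exists th, -sigma <= th <= 0 /\ x = Rabs (chi th))) e).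
  { apply Hlub. intros x [th [Hth ->]]. simpl. now apply H. }
  destruct (Lub_Rbar _); simpl in *; auto.
Qed.

Lemma X3dist_le sigma a1 a2 a3 b1 b2 b3 e : 0 <= e ->
  (forall th, -sigma <= th <= 0 -> Rabs (a1 th - b1 th) <= e /\ Rabs (a2 th - b2 th) <= e /\
                                   Rabs (a3 th - b3 th) <= e) ->
  X3dist sigma a1 a2 a3 b1 b2 b3 <= e.
Proof.
  intros He H. unfold X3dist.
  apply Rmax_lub; [|apply Rmax_lub]; apply Xnorm_le; auto; intros th Hth; apply H; auto.
Qed.

Lemma admissible_seg sigma M1 M2 M3 Phi s : in_box M1 M2 M3 Phi ->
  admissible sigma M1 M2 M3 (seg (p1 Phi) s) (seg (p2 Phi) s) (seg (p3 Phi) s).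
Proof.
  intros [[H1 [H2 H3]] HB]. split; [|split; [|split]]; try (apply contR_seg; auto).
  intros th _. apply HB.
Qed.

Lemma admissible_zero sigma M1 M2 M3 : 0 <= M1 -> 0 <= M2 -> 0 <= M3 ->
  admissible sigma M1 M2 M3 (cst 0) (cst 0) (cst 0).
Proof.
  intros. split; [|split; [|split]]; try apply contR_cst.
  intros th _. unfold cst. lra.
Qed.

Section Nonlinearity.
Variables (sigma M1 M2 M3 L : R) (f : Ffun).
Hypotheses (HL : 0 <= L) (Hlip : condC2 sigma M1 M2 M3 L f).

Lemma f_seg_lipschitz Phi Psi s s' e : 0 <= e -> in_box M1 M2 M3 Phi -> in_box M1 M2 M3 Psi ->
  (forall th, -sigma <= th <= 0 ->
     Rabs (p1 Phi (s + th) - p1 Psi (s' + th)) <= e /\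
     Rabs (p2 Phi (s + th) - p2 Psi (s' + th)) <= e /\
     Rabs (p3 Phi (s + th) - p3 Psi (s' + th)) <= e) ->
  Rabs (f (seg (p1 Phi) s) (seg (p2 Phi) s) (seg (p3 Phi) s) -
        f (seg (p1 Psi) s') (seg (p2 Psi) s') (seg (p3 Psi) s')) <= L * e.
Proof.
  intros He H1 H2 Hd.
  eapply Rle_trans; [apply Hlip; apply admissible_seg; auto|].
  apply Rmult_le_compat_l; auto. apply X3dist_le; auto.
Qed.

Lemma f_seg_bound Phi s : 0 <= M1 -> 0 <= M2 -> 0 <= M3 ->
  f (cst 0) (cst 0) (cst 0) = 0 -> in_box M1 M2 M3 Phi ->
  Rabs (f (seg (p1 Phi) s) (seg (p2 Phi) s) (seg (p3 Phi) s)) <= L * box_max M1 M2 M3.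
Proof.
  intros HM1 HM2 HM3 H0 Hb.
  assert (K := Hlip _ _ _ _ _ _ (admissible_seg sigma _ _ _ _ s Hb)
                 (admissible_zero sigma _ _ _ HM1 HM2 HM3)).
  rewrite H0, Rminus_0_r in K. eapply Rle_trans; [exact K|].
  apply Rmult_le_compat_l; auto. destruct (box_max_ge M1 M2 M3) as [A1 [A2 A3]].
  apply X3dist_le; [lra|].
  intros th _. unfold seg, cst. destruct Hb as [_ Hb]. destruct (Hb (s + th)) as [B1 [B2 B3]].
  rewrite !Rminus_0_r, !Rabs_pos_eq by lra. lra.
Qed.

Lemma f_seg_contR Phi : 0 <= sigma -> in_box M1 M2 M3 Phi ->
  contR (fun s => f (seg (p1 Phi) s) (seg (p2 Phi) s) (seg (p3 Phi) s)).
Proof.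
  intros Hs HB s. apply continuous_eps_delta. intros eps He.
  set (eta := eps / (2 * (L + 1))).
  assert (Heta : 0 < eta) by (unfold eta; apply Rdiv_lt_0_compat; lra).
  destruct HB as [[C1 [C2 C3]] HBb].
  destruct (uniform_continuity_segment _ (s - sigma - 1) (s + 1) eta C1 Heta) as [d1 [Hd1 U1]].
  destruct (uniform_continuity_segment _ (s - sigma - 1) (s + 1) eta C2 Heta) as [d2 [Hd2 U2]].
  destruct (uniform_continuity_segment _ (s - sigma - 1) (s + 1) eta C3 Heta) as [d3 [Hd3 U3]].
  exists (Rmin 1 (Rmin d1 (Rmin d2 d3))). split; [repeat apply Rmin_pos; lra|].
  intros y Hy.
  apply Rmin_Rgt in Hy as [Hy1 Hy]. apply Rmin_Rgt in Hy as [Hyd1 Hy].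
  apply Rmin_Rgt in Hy as [Hyd2 Hyd3]. apply Rabs_lt_between in Hy1.
  eapply Rle_lt_trans.
  - apply (f_seg_lipschitz Phi Phi y s eta); [lra | split; auto; split; auto .. |].
    intros th Hth.
    assert (R1 : s - sigma - 1 <= y + th <= s + 1) by lra.
    assert (R2 : s - sigma - 1 <= s + th <= s + 1) by lra.
    assert (E : y + th - (s + th) = y - s) by ring.
    repeat split; apply Rlt_le; [apply U1 | apply U2 | apply U3]; auto; rewrite E; auto.
  - unfold eta. replace (L * (eps / (2 * (L + 1)))) with ((eps / 2) * (L / (L + 1))) by (field; lra).
    assert (L / (L + 1) < 1) by (apply Rmult_lt_reg_r with (L + 1); [lra|]; field_simplify; lra).
    nra.
Qed.

End Nonlinearity.

(** * Monotonicity of [H] from (PQM) *)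

Lemma leX_seg sigma (u v : R -> R) s : (forall t, u t <= v t) -> leX sigma (seg u s) (seg v s).
Proof. intros H th _. apply H. Qed.

Lemma seg_0 (u : R -> R) s : seg u s 0 = u s.
Proof. unfold seg. now rewrite Rplus_0_r. Qed.

Section QuasiMonotonicity.
Variables (sigma M1 M2 M3 beta1 beta2 beta3 : R) (f1 f2 f3 : Ffun).
Hypothesis HP : condPQM sigma M1 M2 M3 beta1 beta2 beta3 f1 f2 f3.

Lemma Hop1_le r A B t : in_box M1 M2 M3 A -> in_box M1 M2 M3 B -> le3 B A ->
  Hop f1 beta1 r p1 B t <= Hop f1 beta1 r p1 A t.
Proof.
  intros HA HB Hle. unfold Hop.
  destruct (HP _ _ _ _ _ _ (admissible_seg sigma _ _ _ _ (t + r) HA)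
    (admissible_seg sigma _ _ _ _ (t + r) HB)
    (leX_seg _ _ _ _ (fun x => proj1 (Hle x))) (leX_seg _ _ _ _ (fun x => proj1 (proj2 (Hle x))))
    (leX_seg _ _ _ _ (fun x => proj2 (proj2 (Hle x))))) as [H _].
  rewrite !seg_0 in H. lra.
Qed.

Lemma Hop3_le r A B t : in_box M1 M2 M3 A -> in_box M1 M2 M3 B -> le3 B A ->
  Hop f3 beta3 r p3 B t <= Hop f3 beta3 r p3 A t.
Proof.
  intros HA HB Hle. unfold Hop.
  destruct (HP _ _ _ _ _ _ (admissible_seg sigma _ _ _ _ (t + r) HA)
    (admissible_seg sigma _ _ _ _ (t + r) HB)
    (leX_seg _ _ _ _ (fun x => proj1 (Hle x))) (leX_seg _ _ _ _ (fun x => proj1 (proj2 (Hle x))))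
    (leX_seg _ _ _ _ (fun x => proj2 (proj2 (Hle x))))) as [_ [_ [_ [_ H]]]].
  rewrite !seg_0 in H. lra.
Qed.

(* [f2] is increasing in its second argument (up to [beta2]) and decreasing in the other two,
   so the extreme values of [H2] on [Lo <= Phi <= Up] sit at the mixed triples. *)
Lemma Hop2_mixed_lower r Lo Up Phi t :
  in_box M1 M2 M3 Lo -> in_box M1 M2 M3 Up -> in_box M1 M2 M3 Phi -> le3 Lo Phi -> le3 Phi Up ->
  Hop f2 beta2 r p2 (mk3 (p1 Up) (p2 Lo) (p3 Up)) t <= Hop f2 beta2 r p2 Phi t.
Proof.
  intros HL HU HF H1 H2. unfold Hop. simpl. set (s := t + r).
  assert (B1 := in_box_mix _ _ _ _ _ _ HU HL HU).
  assert (B2 := in_box_mix _ _ _ _ _ _ HF HL HU).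
  assert (B3 := in_box_mix _ _ _ _ _ _ HF HL HF).
  destruct (HP _ _ _ _ _ _ (admissible_seg sigma _ _ _ _ s B1) (admissible_seg sigma _ _ _ _ s B2)
    (leX_seg _ _ _ _ (fun x => proj1 (H2 x))) (leX_seg _ _ _ _ (fun x => Rle_refl _))
    (leX_seg _ _ _ _ (fun x => Rle_refl _))) as [_ [_ [S1 _]]].
  destruct (HP _ _ _ _ _ _ (admissible_seg sigma _ _ _ _ s B2) (admissible_seg sigma _ _ _ _ s B3)
    (leX_seg _ _ _ _ (fun x => Rle_refl _)) (leX_seg _ _ _ _ (fun x => Rle_refl _))
    (leX_seg _ _ _ _ (fun x => proj2 (proj2 (H2 x))))) as [_ [_ [_ [S2 _]]]].
  destruct (HP _ _ _ _ _ _ (admissible_seg sigma _ _ _ _ s HF) (admissible_seg sigma _ _ _ _ s B3)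
    (leX_seg _ _ _ _ (fun x => Rle_refl _)) (leX_seg _ _ _ _ (fun x => proj1 (proj2 (H1 x))))
    (leX_seg _ _ _ _ (fun x => Rle_refl _))) as [_ [S3 _]].
  simpl in *. rewrite !seg_0 in S3. lra.
Qed.

Lemma Hop2_mixed_upper r Lo Up Phi t :
  in_box M1 M2 M3 Lo -> in_box M1 M2 M3 Up -> in_box M1 M2 M3 Phi -> le3 Lo Phi -> le3 Phi Up ->
  Hop f2 beta2 r p2 Phi t <= Hop f2 beta2 r p2 (mk3 (p1 Lo) (p2 Up) (p3 Lo)) t.
Proof.
  intros HL HU HF H1 H2. unfold Hop. simpl. set (s := t + r).
  assert (B1 := in_box_mix _ _ _ _ _ _ HF HU HF).
  assert (B2 := in_box_mix _ _ _ _ _ _ HF HU HL).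
  assert (B3 := in_box_mix _ _ _ _ _ _ HL HU HL).
  destruct (HP _ _ _ _ _ _ (admissible_seg sigma _ _ _ _ s B1) (admissible_seg sigma _ _ _ _ s HF)
    (leX_seg _ _ _ _ (fun x => Rle_refl _)) (leX_seg _ _ _ _ (fun x => proj1 (proj2 (H2 x))))
    (leX_seg _ _ _ _ (fun x => Rle_refl _))) as [_ [S1 _]].
  destruct (HP _ _ _ _ _ _ (admissible_seg sigma _ _ _ _ s B1) (admissible_seg sigma _ _ _ _ s B2)
    (leX_seg _ _ _ _ (fun x => Rle_refl _)) (leX_seg _ _ _ _ (fun x => Rle_refl _))
    (leX_seg _ _ _ _ (fun x => proj2 (proj2 (H1 x))))) as [_ [_ [_ [S2 _]]]].
  destruct (HP _ _ _ _ _ _ (admissible_seg sigma _ _ _ _ s B2) (admissible_seg sigma _ _ _ _ s B3)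
    (leX_seg _ _ _ _ (fun x => proj1 (H1 x))) (leX_seg _ _ _ _ (fun x => Rle_refl _))
    (leX_seg _ _ _ _ (fun x => Rle_refl _))) as [_ [_ [S3 _]]].
  simpl in *. rewrite !seg_0 in S1. lra.
Qed.

End QuasiMonotonicity.

(** * One component [F_i = G_i * H_i] of the operator *)

Set Implicit Arguments.
Record wave_component (sigma M1 M2 M3 D c r beta K d L : R) (f : Ffun) (G : R -> R) : Prop := {
  wc_sigma : 0 <= sigma;
  wc_box : 0 <= M1 /\ 0 <= M2 /\ 0 <= M3;
  wc_K : 0 < K;
  wc_d : 0 < d;
  wc_L : 0 <= L;
  wc_beta : 0 <= beta;
  wc_kernel : kernelG D c r beta K d G;
  wc_f0 : f (cst 0) (cst 0) (cst 0) = 0;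
  wc_lip : condC2 sigma M1 M2 M3 L f }.
Unset Implicit Arguments.

Definition sandwich (lo f_lo f_mid f_up up : R -> R) : Prop :=
  forall t, lo t <= f_lo t /\ f_lo t <= f_mid t /\ f_mid t <= f_up t /\ f_up t <= up t.

Section Component.
Context {sigma M1 M2 M3 D c r beta K d L : R} {f : Ffun} {G : R -> R} {comp : fn3 -> R -> R}.
Hypotheses (W : wave_component sigma M1 M2 M3 D c r beta K d L f G) (Hproj : projection comp).

Local Notation H := (Hop f beta r comp).
Local Notation F := (Fop G f beta r comp).
Local Notation Hbound := ((L + beta) * box_max M1 M2 M3).

Lemma Hop_bound Phi : in_box M1 M2 M3 Phi -> forall t, Rabs (H Phi t) <= Hbound.
Proof.
  intros HB t. destruct W as [_ [HM1 [HM2 HM3]] _ _ HL Hbeta _ Hf0 Hlip]. unfold Hop.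
  eapply Rle_trans; [apply Rabs_triang|]. rewrite Rmult_plus_distr_r.
  apply Rplus_le_compat; [apply (f_seg_bound sigma); auto|].
  rewrite Rabs_mult, Rabs_pos_eq by exact Hbeta. apply Rmult_le_compat_l; [exact Hbeta|].
  eapply Rle_trans; [apply projection_abs_le, Hproj | apply in_box_vnorm3, HB].
Qed.

Lemma Hop_contR Phi : in_box M1 M2 M3 Phi -> contR (H Phi).
Proof.
  intros HB t. destruct W as [Hs _ _ _ HL _ _ _ Hlip]. unfold Hop.
  apply continuous_Rplus.
  - apply (contR_shift (fun s => f (seg (p1 Phi) s) (seg (p2 Phi) s) (seg (p3 Phi) s)) r).
    now apply (f_seg_contR sigma M1 M2 M3 L).
  - apply continuous_Rmult; [apply continuous_Rconst|].
    apply (contR_shift (comp Phi) r), projection_contR, HB; exact Hproj.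
Qed.

Lemma Fop_contR Phi : in_box M1 M2 M3 Phi -> contR (F Phi).
Proof.
  intros HB. apply (kernelG_conv_contR D c r beta K d G _ (wc_kernel W) (Hop_contR Phi HB)).
  exists Hbound. exact (Hop_bound Phi HB).
Qed.

Lemma Fop_le Phi Psi : in_box M1 M2 M3 Phi -> in_box M1 M2 M3 Psi ->
  (forall t, H Phi t <= H Psi t) -> forall t, F Phi t <= F Psi t.
Proof.
  intros HPhi HPsi Hle t.
  apply (conv_le G K d (wc_d W) (kernelG_exp_kernel _ _ _ _ _ _ _ (wc_kernel W)) _ _ Hbound Hbound);
    auto using Hop_contR, Hop_bound.
Qed.

Lemma lower_solution_le_Fop Phi : in_box M1 M2 M3 Phi -> C2bnd (comp Phi) ->
  (forall t, waveop D c r f (comp Phi) Phi t >= 0) -> forall t, comp Phi t <= F Phi t.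
Proof.
  intros HB HC Hw.
  apply (lower_solution_le_conv D c r beta K d G (comp Phi) (H Phi)
    (fun t => f (seg (p1 Phi) (t + r)) (seg (p2 Phi) (t + r)) (seg (p3 Phi) (t + r))) Hbound
    (wc_d W) (wc_kernel W) HC (Hop_contR Phi HB) (Hop_bound Phi HB)); [reflexivity | exact Hw].
Qed.

Lemma Fop_le_upper_solution Phi : in_box M1 M2 M3 Phi -> C2bnd (comp Phi) ->
  (forall t, waveop D c r f (comp Phi) Phi t <= 0) -> forall t, F Phi t <= comp Phi t.
Proof.
  intros HB HC Hw.
  apply (conv_le_upper_solution D c r beta K d G (comp Phi) (H Phi)
    (fun t => f (seg (p1 Phi) (t + r)) (seg (p2 Phi) (t + r)) (seg (p3 Phi) (t + r))) Hbound
    (wc_d W) (wc_kernel W) HC (Hop_contR Phi HB) (Hop_bound Phi HB)); [reflexivity | exact Hw].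
Qed.

Lemma Fop_sandwich Lo Up Phi :
  in_box M1 M2 M3 Lo -> in_box M1 M2 M3 Up -> in_box M1 M2 M3 Phi ->
  C2bnd (comp Lo) -> C2bnd (comp Up) ->
  (forall t, waveop D c r f (comp Lo) Lo t >= 0) -> (forall t, waveop D c r f (comp Up) Up t <= 0) ->
  (forall t, H Lo t <= H Phi t) -> (forall t, H Phi t <= H Up t) ->
  sandwich (comp Lo) (F Lo) (F Phi) (F Up) (comp Up).
Proof.
  intros BL BU BP CL CU WL WU HLP HPU t.
  split; [|split; [|split]].
  - now apply lower_solution_le_Fop.
  - now apply Fop_le.
  - now apply Fop_le.
  - now apply Fop_le_upper_solution.
Qed.

Lemma Fop_equicontinuous : forall eps, 0 < eps -> exists del, 0 < del /\
  forall Phi, in_box M1 M2 M3 Phi ->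
    forall t t', Rabs (t - t') < del -> Rabs (F Phi t - F Phi t') <= eps.
Proof.
  intros eps He. destruct W as [_ [HM1 [HM2 HM3]] HK Hd HL Hbeta HG _ _].
  assert (HB : 0 <= Hbound).
  { apply Rmult_le_pos; [lra|]. destruct (box_max_ge M1 M2 M3) as [A _]. lra. }
  destruct (conv_equicontinuous G K d Hd (kernelG_exp_kernel _ _ _ _ _ _ _ HG) Hbound HK HB eps He)
    as [del [Hdel Hu]].
  exists del. split; [exact Hdel|]. intros Phi HPhi.
  apply Hu; [apply Hop_contR | apply Hop_bound]; exact HPhi.
Qed.

(* A delay [r] and a history of length [sigma] cost at most the factor [e^{mu(|r| + sigma)}]. *)
Lemma Hop_weighted_lipschitz mu Phi Psi del : 0 < mu -> 0 <= del ->
  in_box M1 M2 M3 Phi -> in_box M1 M2 M3 Psi ->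
  (forall x, vnorm3 (sub3 Psi Phi) x <= del * exp (mu * Rabs x)) ->
  forall s, Rabs (H Psi s - H Phi s) <=
            (L + beta) * exp (mu * (Rabs r + sigma)) * del * exp (mu * Rabs s).
Proof.
  intros Hmu Hdel BPhi BPsi Hdiff s. destruct W as [Hs _ _ _ HL Hbeta _ _ Hlip].
  set (E := del * exp (mu * (Rabs s + Rabs r + sigma))).
  assert (HE : forall y, Rabs y <= Rabs s + Rabs r + sigma -> vnorm3 (sub3 Psi Phi) y <= E).
  { intros y Hy. eapply Rle_trans; [apply Hdiff|].
    apply Rmult_le_compat_l; [exact Hdel|]. apply exp_le, Rmult_le_compat_l; lra. }
  assert (Hf : Rabs (f (seg (p1 Psi) (s + r)) (seg (p2 Psi) (s + r)) (seg (p3 Psi) (s + r)) -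
                     f (seg (p1 Phi) (s + r)) (seg (p2 Phi) (s + r)) (seg (p3 Phi) (s + r)))
               <= L * E).
  { apply f_seg_lipschitz with (M1 := M1) (M2 := M2) (M3 := M3) (sigma := sigma); auto.
    { unfold E. apply Rmult_le_pos; [exact Hdel | left; apply exp_pos]. }
    intros th Hth.
    assert (Hy : Rabs (s + r + th) <= Rabs s + Rabs r + sigma).
    { eapply Rle_trans; [apply Rabs_triang|].
      eapply Rle_trans; [apply Rplus_le_compat_r, Rabs_triang|].
      rewrite (Rabs_left1 th) by lra. lra. }
    destruct (vnorm_ge (p1 Psi (s + r + th) - p1 Phi (s + r + th))
      (p2 Psi (s + r + th) - p2 Phi (s + r + th)) (p3 Psi (s + r + th) - p3 Phi (s + r + th)))
      as [V1 [V2 V3]].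
    assert (HE' := HE _ Hy). unfold vnorm3 in HE'. simpl in HE'. repeat split; lra. }
  assert (Hc : Rabs (comp Psi (s + r) - comp Phi (s + r)) <= E).
  { rewrite <- projection_sub3 by exact Hproj.
    eapply Rle_trans; [apply projection_abs_le, Hproj|]. apply HE.
    eapply Rle_trans; [apply Rabs_triang | lra]. }
  unfold Hop.
  replace (_ + beta * comp Psi (s + r) - (_ + beta * comp Phi (s + r)))
    with ((f (seg (p1 Psi) (s + r)) (seg (p2 Psi) (s + r)) (seg (p3 Psi) (s + r)) -
           f (seg (p1 Phi) (s + r)) (seg (p2 Phi) (s + r)) (seg (p3 Phi) (s + r))) +
          beta * (comp Psi (s + r) - comp Phi (s + r))) by ring.
  eapply Rle_trans; [apply Rabs_triang|]. rewrite Rabs_mult, (Rabs_pos_eq beta) by lra.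
  replace ((L + beta) * exp (mu * (Rabs r + sigma)) * del * exp (mu * Rabs s))
    with (L * E + beta * E)
    by (unfold E; replace (mu * (Rabs s + Rabs r + sigma)) with
          (mu * (Rabs r + sigma) + mu * Rabs s) by ring; rewrite exp_plus; ring).
  apply Rplus_le_compat; [exact Hf | apply Rmult_le_compat_l; lra].
Qed.

Lemma Fop_weighted_lipschitz mu : 0 < mu -> mu < d -> exists C, 0 <= C /\
  forall Phi Psi del, 0 <= del -> in_box M1 M2 M3 Phi -> in_box M1 M2 M3 Psi ->
    (forall x, vnorm3 (sub3 Psi Phi) x <= del * exp (mu * Rabs x)) ->
    forall t, Rabs (F Psi t - F Phi t) <= C * del * exp (mu * Rabs t).
Proof.
  intros Hmu Hmd. destruct W as [_ _ HK _ HL Hbeta HG _ _].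
  set (A := (L + beta) * exp (mu * (Rabs r + sigma))).
  assert (HA : 0 <= A) by (apply Rmult_le_pos; [lra | left; apply exp_pos]).
  exists (A * K * (2 / (d - mu))). split.
  { apply Rmult_le_pos; [apply Rmult_le_pos; lra|].
    apply Rmult_le_pos; [lra | left; apply Rinv_0_lt_compat; lra]. }
  intros Phi Psi del Hdel BPhi BPsi Hdiff t. unfold Fop.
  rewrite <- (conv_minus G K d (wc_d W) (kernelG_exp_kernel _ _ _ _ _ _ _ HG) _ _ Hbound Hbound t)
    by auto using Hop_contR, Hop_bound.
  replace (A * K * (2 / (d - mu)) * del * exp (mu * Rabs t))
    with ((A * del) * K * exp (mu * Rabs t) * (2 / (d - mu))) by ring.
  apply (conv_weighted_bound G K d (wc_d W) (kernelG_exp_kernel _ _ _ _ _ _ _ HG) _ (Hbound + Hbound));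
    auto; [| | apply Rmult_le_pos; auto |].
  - intros x. apply continuous_Rminus; apply Hop_contR; assumption.
  - intros s. eapply Rle_trans; [apply Rabs_triang|]. rewrite Rabs_Ropp.
    apply Rplus_le_compat; apply Hop_bound; assumption.
  - intros s. unfold A. now apply Hop_weighted_lipschitz.
Qed.

End Component.

(** * The weighted norm [|.|_mu] *)

Lemma exp_opp_mul_abs mu t : exp (- mu * Rabs t) * exp (mu * Rabs t) = 1.
Proof. rewrite <- exp_plus. replace (- mu * Rabs t + mu * Rabs t) with 0 by ring. apply exp_0. Qed.

Lemma mu_norm_le mu A e : (forall t, exp (- mu * Rabs t) * vnorm3 A t <= e) ->
  is_finite (mu_norm mu A) /\ mu_norm mu A <= e.
Proof.
  intros H. unfold mu_norm.
  destruct (Lub_Rbar_correct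
    (fun x => exists t, x = exp (- mu * Rabs t) * vnorm (p1 A t) (p2 A t) (p3 A t))) as [Hub Hlub].
  assert (Hb : Rbar_le (Lub_Rbar (fun x => exists t,
                 x = exp (- mu * Rabs t) * vnorm (p1 A t) (p2 A t) (p3 A t))) e).
  { apply Hlub. intros x [t ->]. apply H. }
  assert (Hl := Hub _ (ex_intro _ 0 eq_refl)).
  destruct (Lub_Rbar _); simpl in *; easy.
Qed.

Lemma mu_norm_lt mu A e eps : (forall t, exp (- mu * Rabs t) * vnorm3 A t <= e) ->
  e < eps -> Rbar_lt (mu_norm mu A) (Finite eps).
Proof.
  intros H He. destruct (mu_norm_le mu A e H) as [Hf Hle].
  rewrite <- Hf in *. simpl in *. lra.
Qed.

Lemma mu_norm_lt_pointwise mu A del : Rbar_lt (mu_norm mu A) (Finite del) ->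
  forall t, vnorm3 A t <= del * exp (mu * Rabs t).
Proof.
  intros H t. unfold mu_norm in H.
  destruct (Lub_Rbar_correct
    (fun x => exists t, x = exp (- mu * Rabs t) * vnorm (p1 A t) (p2 A t) (p3 A t))) as [Hub _].
  assert (Hl := Hub _ (ex_intro _ t eq_refl)).
  assert (Hw : exp (- mu * Rabs t) * vnorm3 A t <= del)
    by (unfold vnorm3; destruct (Lub_Rbar _); simpl in *; try easy; lra).
  replace (vnorm3 A t) with ((exp (- mu * Rabs t) * vnorm3 A t) * exp (mu * Rabs t))
    by (rewrite Rmult_comm, <- Rmult_assoc, (Rmult_comm (exp _)), exp_opp_mul_abs; ring).
  apply Rmult_le_compat_r; [left; apply exp_pos | exact Hw].
Qed.

Lemma Bmu_of_bounded mu Phi B : 0 <= mu -> cont3 Phi -> (forall t, vnorm3 Phi t <= B) -> Bmu mu Phi.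
Proof.
  intros Hmu HC HB. split; [exact HC|]. apply (mu_norm_le mu Phi B).
  intros t. assert (Hn : 0 <= vnorm3 Phi t)
    by (eapply Rle_trans; [apply Rabs_pos | apply (vnorm_ge (p1 Phi t) (p2 Phi t) (p3 Phi t))]).
  assert (exp (- mu * Rabs t) <= 1) by (rewrite <- exp_0; apply exp_le; generalize (Rabs_pos t); nra).
  generalize (exp_pos (- mu * Rabs t)) (HB t). nra.
Qed.

Lemma mu_norm_continuous (S : fn3 -> Prop) (T : fn3 -> fn3) mu C : 0 <= C ->
  (forall Phi Psi del, 0 <= del -> S Phi -> S Psi ->
     (forall x, vnorm3 (sub3 Psi Phi) x <= del * exp (mu * Rabs x)) ->
     forall t, vnorm3 (sub3 (T Psi) (T Phi)) t <= C * del * exp (mu * Rabs t)) ->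
  forall Phi, S Phi -> forall eps, 0 < eps -> exists del, 0 < del /\
    forall Psi, S Psi -> Rbar_lt (mu_norm mu (sub3 Psi Phi)) (Finite del) ->
      Rbar_lt (mu_norm mu (sub3 (T Psi) (T Phi))) (Finite eps).
Proof.
  intros HC HT Phi HPhi eps He.
  set (del := eps / (2 * (C + 1))).
  assert (Hdel : 0 < del) by (unfold del; apply Rdiv_lt_0_compat; lra).
  exists del. split; [exact Hdel|]. intros Psi HPsi Hlt.
  apply (mu_norm_lt mu _ (C * del)); [| unfold del].
  - intros t. assert (Hb := HT Phi Psi del (Rlt_le _ _ Hdel) HPhi HPsi
      (mu_norm_lt_pointwise mu _ del Hlt) t).
    apply Rmult_le_compat_l with (r := exp (- mu * Rabs t)) in Hb; [|left; apply exp_pos].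
    replace (exp (- mu * Rabs t) * (C * del * exp (mu * Rabs t))) with
      (C * del * (exp (- mu * Rabs t) * exp (mu * Rabs t))) in Hb by ring.
    rewrite exp_opp_mul_abs, Rmult_1_r in Hb. exact Hb.
  - replace (C * (eps / (2 * (C + 1)))) with ((eps / 2) * (C / (C + 1))) by (field; lra).
    assert (C / (C + 1) < 1) by (apply Rmult_lt_reg_r with (C + 1); [lra|]; field_simplify; lra).
    nra.
Qed.

(** * Arzela-Ascoli on the real line *)

Definition incr_seq (phi : nat -> nat) : Prop := forall n, (phi n < phi (S n))%nat.

Definition convergent (x : nat -> R) : Prop :=
  exists l, forall eps, 0 < eps -> exists N, forall n, (N <= n)%nat -> Rabs (x n - l) <= eps.

Definition equicontinuous (u : nat -> R -> R) : Prop :=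
  forall eps, 0 < eps -> exists d, 0 < d /\
    forall n t t', Rabs (t - t') < d -> Rabs (u n t - u n t') <= eps.

Definition cv_locally_uniformly (u : nat -> R -> R) (v : R -> R) : Prop :=
  forall T eps, 0 < eps -> exists N, forall n, (N <= n)%nat ->
    forall t, Rabs t <= T -> Rabs (u n t - v t) <= eps.

Lemma incr_seq_lt phi : incr_seq phi -> forall m n, (m < n)%nat -> (phi m < phi n)%nat.
Proof. intros H m n Hmn. induction Hmn; [apply H|]. specialize (H m0). lia. Qed.

Lemma incr_seq_ge phi : incr_seq phi -> forall n, (n <= phi n)%nat.
Proof. intros H n. induction n; [lia|]. specialize (H n). lia. Qed.

Lemma incr_seq_comp phi psi : incr_seq phi -> incr_seq psi -> incr_seq (fun n => phi (psi n)).
Proof. intros Hf Hg n. apply incr_seq_lt; auto. Qed.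

Lemma archimed_inv eps : 0 < eps -> exists N : nat, / (INR N + 1) < eps.
Proof.
  intros He. destruct (archimed_cor1 eps He) as [N [HN HN0]]. exists N.
  eapply Rle_lt_trans; [|exact HN]. apply lt_0_INR in HN0.
  apply Rinv_le_contravar; lra.
Qed.

Lemma bounded_convergent_subseq (x : nat -> R) B : (forall n, Rabs (x n) <= B) ->
  exists phi, incr_seq phi /\ convergent (fun n => x (phi n)).
Proof.
  intros HB.
  destruct (Bolzano_Weierstrass x (fun y => -B <= y <= B) (compact_P3 (-B) B)) as [l Hl].
  { intros n. apply Rabs_le_between, HB. }
  assert (Hp : forall N k : nat, exists p, (N <= p)%nat /\ Rabs (x p - l) < / (INR k + 1)).
  { intros N k.
    assert (Hk : 0 < / (INR k + 1)) by (apply Rinv_0_lt_compat; generalize (pos_INR k); lra).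
    destruct (Hl (fun y => Rabs (y - l) < / (INR k + 1)) N) as [p [Hp1 Hp2]];
      [now exists (mkposreal _ Hk) | now exists p]. }
  set (pick := fun N k => proj1_sig (constructive_indefinite_description _ (Hp N k))).
  assert (Hpick : forall N k, (N <= pick N k)%nat /\ Rabs (x (pick N k) - l) < / (INR k + 1)).
  { intros N k. unfold pick. destruct (constructive_indefinite_description _ _). auto. }
  set (phi := fix phi (n : nat) : nat :=
    match n with O => pick O O | S m => pick (S (phi m)) (S m) end).
  exists phi. split.
  - intros n. simpl. destruct (Hpick (S (phi n)) (S n)) as [H _]. lia.
  - exists l. intros eps He. destruct (archimed_inv eps He) as [N HN]. exists N. intros n Hn.
    assert (Hb : Rabs (x (phi n) - l) < / (INR n + 1)) by (destruct n; simpl; apply Hpick).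
    apply Rlt_le. eapply Rlt_trans; [exact Hb|]. eapply Rle_lt_trans; [| exact HN].
    apply Rinv_le_contravar; [generalize (pos_INR N); lra|]. apply le_INR in Hn. lra.
Qed.

(* Iterated extraction: [ext (S k)] refines [ext k]; the diagonal [ext n n] works for every row. *)
Lemma diagonal_convergent_subseq (a : nat -> nat -> R) B : (forall j n, Rabs (a j n) <= B) ->
  exists phi, incr_seq phi /\ forall j, convergent (fun n => a j (phi n)).
Proof.
  intros HB.
  assert (HE : forall x : nat -> R, exists phi, incr_seq phi /\
                 ((forall n, Rabs (x n) <= B) -> convergent (fun n => x (phi n)))).
  { intros x. destruct (classic (forall n, Rabs (x n) <= B)) as [H|H].
    - destruct (bounded_convergent_subseq x B H) as [phi [H1 H2]]. exists phi. auto.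
    - exists (fun n => n). split; [intros n; lia | contradiction]. }
  set (E := fun x => proj1_sig (constructive_indefinite_description _ (HE x))).
  assert (HEs : forall x, incr_seq (E x) /\
                  ((forall n, Rabs (x n) <= B) -> convergent (fun n => x (E x n)))).
  { intros x. unfold E. destruct (constructive_indefinite_description _ _). auto. }
  set (ext := fix ext (k : nat) : nat -> nat := match k with
     | O => E (a O)
     | S k' => fun n => ext k' (E (fun m => a (S k') (ext k' m)) n) end).
  assert (P1 : forall k, incr_seq (ext k)).
  { induction k; simpl; [apply HEs|]. intros n. apply incr_seq_lt; auto. apply HEs. }
  assert (P2 : forall k, convergent (fun n => a k (ext k n))).
  { destruct k; simpl; [apply HEs; intros; apply HB|].
    apply (proj2 (HEs (fun m => a (S k) (ext k m)))). intros; apply HB. }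
  assert (P3 : forall i j, exists tau, (forall m, (m <= tau m)%nat) /\
                 forall m, ext (j + i)%nat m = ext j (tau m)).
  { induction i; intros j.
    - exists (fun m => m). split; intros; auto. rewrite Nat.add_0_r. auto.
    - destruct (IHi j) as [tau [Ht1 Ht2]].
      exists (fun m => tau (E (fun m0 => a (S (j + i)) (ext (j + i)%nat m0)) m)). split.
      + intros m. eapply Nat.le_trans; [| apply Ht1]. apply incr_seq_ge, HEs.
      + intros m. rewrite Nat.add_succ_r. simpl. apply Ht2. }
  exists (fun n => ext n n). split.
  - intros n. simpl. apply incr_seq_lt; auto. eapply Nat.lt_le_trans; [| apply incr_seq_ge, HEs]. lia.
  - intros j. destruct (P2 j) as [l Hl]. exists l. intros eps He.
    destruct (Hl eps He) as [N HN]. exists (Nat.max N j). intros n Hn.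
    destruct (P3 (n - j)%nat j) as [tau [Ht1 Ht2]].
    replace (ext n n) with (ext (j + (n - j))%nat n) by (f_equal; lia).
    rewrite Ht2. apply HN. specialize (Ht1 n). lia.
Qed.

Definition grid (j : nat) : R :=
  let (p, m) := Cantor.of_nat j in let (x, y) := Cantor.of_nat p in (INR x - INR y) / (INR m + 1).

Lemma grid_to_nat x y m : grid (Cantor.to_nat (Cantor.to_nat (x, y), m)) = (INR x - INR y) / (INR m + 1).
Proof. unfold grid. rewrite !Cantor.cancel_of_to. reflexivity. Qed.

Lemma near_grid (t : R) (m : nat) : exists x y : nat, (x = 0 \/ y = 0)%nat /\
  Rabs (t - (INR x - INR y) / (INR m + 1)) < / (INR m + 1) /\
  INR x + INR y <= Rabs t * (INR m + 1).
Proof.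
  assert (Hm : 0 < INR m + 1) by (generalize (pos_INR m); lra).
  assert (Hfrac : forall a, 0 <= a < 1 -> Rabs (a / (INR m + 1)) < / (INR m + 1)).
  { intros a Ha. rewrite Rabs_pos_eq by (apply Rmult_le_pos; [lra | left; apply Rinv_0_lt_compat; lra]).
    unfold Rdiv. rewrite <- (Rmult_1_l (/ (INR m + 1))) at 2.
    apply Rmult_lt_compat_r; [apply Rinv_0_lt_compat|]; lra. }
  destruct (Rle_dec 0 t) as [Ht|Ht].
  - destruct (nfloor_ex (t * (INR m + 1))) as [x [Hx1 Hx2]]; [nra|].
    exists x, 0%nat. simpl INR. rewrite (Rabs_pos_eq t) by lra. split; [auto|split; [|lra]].
    replace (t - (INR x - 0) / (INR m + 1)) with ((t * (INR m + 1) - INR x) / (INR m + 1))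
      by (field; lra).
    apply Hfrac; lra.
  - destruct (nfloor_ex (- t * (INR m + 1))) as [y [Hy1 Hy2]]; [nra|].
    exists 0%nat, y. simpl INR. rewrite (Rabs_left t) by lra. split; [auto|split; [|lra]].
    replace (t - (0 - INR y) / (INR m + 1)) with (- ((- t * (INR m + 1) - INR y) / (INR m + 1)))
      by (field; lra).
    rewrite Rabs_Ropp. apply Hfrac; lra.
Qed.

Lemma convergent_cauchy_finite (a : nat -> nat -> R) eps K : 0 < eps ->
  (forall k, convergent (a k)) ->
  exists N, forall k, (k <= K)%nat -> forall n n', (N <= n)%nat -> (N <= n')%nat ->
    Rabs (a k n - a k n') <= eps.
Proof.
  intros He Hc. induction K.
  - destruct (Hc 0%nat) as [l Hl]. destruct (Hl (eps / 2)) as [N HN]; [lra|].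
    exists N. intros k Hk n n' Hn Hn'. replace k with 0%nat by lia.
    assert (K1 := HN n Hn). assert (K2 := HN n' Hn').
    replace (a 0%nat n - a 0%nat n') with ((a 0%nat n - l) - (a 0%nat n' - l)) by ring.
    eapply Rle_trans; [apply Rabs_triang|]. rewrite Rabs_Ropp. lra.
  - destruct IHK as [N0 HN0]. destruct (Hc (S K)) as [l Hl]. destruct (Hl (eps / 2)) as [N1 HN1]; [lra|].
    exists (Nat.max N0 N1). intros k Hk n n' Hn Hn'.
    destruct (Nat.le_gt_cases k K) as [Hk'|Hk']; [apply HN0; auto; lia|].
    replace k with (S K) by lia.
    assert (K1 := HN1 n ltac:(lia)). assert (K2 := HN1 n' ltac:(lia)).
    replace (a (S K) n - a (S K) n') with ((a (S K) n - l) - (a (S K) n' - l)) by ring.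
    eapply Rle_trans; [apply Rabs_triang|]. rewrite Rabs_Ropp. lra.
Qed.

(* On [|t| <= T] every point is within [1/(m+1)] of one of finitely many grid points. *)
Lemma equicontinuous_grid_cauchy (w : nat -> R -> R) : equicontinuous w ->
  (forall j, convergent (fun n => w n (grid j))) ->
  forall T eps, 0 < eps -> exists N, forall n n', (N <= n)%nat -> (N <= n')%nat ->
    forall t, Rabs t <= T -> Rabs (w n t - w n' t) <= eps.
Proof.
  intros Heq Hc T eps He.
  destruct (Heq (eps / 3)) as [d [Hd Hud]]; [lra|].
  destruct (archimed_inv d Hd) as [m Hm].
  set (q := fun x y => grid (Cantor.to_nat (Cantor.to_nat (x, y), m))).
  assert (Hm1 : 0 < INR m + 1) by (generalize (pos_INR m); lra).
  destruct (nfloor_ex (Rmax 0 T * (INR m + 1))) as [K [HK1 HK2]];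
    [apply Rmult_le_pos; [apply Rmax_l | lra]|].
  destruct (convergent_cauchy_finite (fun x n => w n (q x 0%nat)) (eps / 3) K) as [N1 HN1];
    [lra | intros; apply Hc|].
  destruct (convergent_cauchy_finite (fun y n => w n (q 0%nat y)) (eps / 3) K) as [N2 HN2];
    [lra | intros; apply Hc|].
  exists (Nat.max N1 N2). intros n n' Hn Hn' t Ht.
  destruct (near_grid t m) as [x [y [Hxy [Hd1 Hd2]]]].
  assert (Hx : (x <= K)%nat /\ (y <= K)%nat).
  { assert (INR x + INR y < INR (S K)).
    { rewrite S_INR. eapply Rle_lt_trans; [exact Hd2|]. eapply Rle_lt_trans; [| exact HK2].
      apply Rmult_le_compat_r; [lra|]. eapply Rle_trans; [exact Ht | apply Rmax_r]. }
    generalize (pos_INR x) (pos_INR y). intros.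
    assert (x < S K)%nat by (apply INR_lt; lra). assert (y < S K)%nat by (apply INR_lt; lra). lia. }
  assert (Hp : Rabs (w n (q x y) - w n' (q x y)) <= eps / 3).
  { destruct Hxy as [-> | ->]; [apply (HN2 y) | apply (HN1 x)]; lia. }
  assert (Hdist : Rabs (t - q x y) < d) by (unfold q; rewrite grid_to_nat; lra).
  assert (A1 := Hud n t (q x y) Hdist). assert (A2 := Hud n' t (q x y) Hdist).
  replace (w n t - w n' t) with
    ((w n t - w n (q x y)) + (w n (q x y) - w n' (q x y)) - (w n' t - w n' (q x y))) by ring.
  eapply Rle_trans; [apply Rabs_triang|]. rewrite Rabs_Ropp.
  eapply Rle_trans; [apply Rplus_le_compat_r, Rabs_triang|]. lra.
Qed.

Lemma cauchy_locally_uniformly_limit (w : nat -> R -> R) :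
  (forall T eps, 0 < eps -> exists N, forall n n', (N <= n)%nat -> (N <= n')%nat ->
     forall t, Rabs t <= T -> Rabs (w n t - w n' t) <= eps) ->
  exists v, cv_locally_uniformly w v.
Proof.
  intros UC.
  assert (Hlim : forall t, exists l : R, is_lim_seq (fun n => w n t) l).
  { intros t. apply (proj2 (ex_lim_seq_cauchy_corr _)). intros eps.
    destruct (UC (Rabs t) (eps / 2)) as [N HN]; [generalize (cond_pos eps); lra|].
    exists N. intros n n' Hn Hn'. eapply Rle_lt_trans; [apply HN; auto; apply Rle_refl|].
    generalize (cond_pos eps). lra. }
  set (v := fun t => proj1_sig (constructive_indefinite_description _ (Hlim t))).
  assert (Hv : forall t, is_lim_seq (fun n => w n t) (v t)).
  { intros t. unfold v. destruct (constructive_indefinite_description _ _). auto. }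
  exists v. intros T eps He. destruct (UC T (eps / 2)) as [N HN]; [lra|].
  exists N. intros n Hn t Ht.
  destruct (proj1 (is_lim_seq_Reals _ _) (Hv t) (eps / 2)) as [N2 HN2]; [lra|].
  specialize (HN2 (Nat.max N N2) ltac:(lia)). unfold Rdist in HN2.
  specialize (HN n (Nat.max N N2) Hn ltac:(lia) t Ht).
  replace (w n t - v t) with ((w n t - w (Nat.max N N2) t) + (w (Nat.max N N2) t - v t)) by ring.
  eapply Rle_trans; [apply Rabs_triang | lra].
Qed.

Lemma arzela_ascoli (u : nat -> R -> R) B : (forall n t, Rabs (u n t) <= B) -> equicontinuous u ->
  exists phi, incr_seq phi /\ exists v, cv_locally_uniformly (fun n => u (phi n)) v.
Proof.
  intros HB Heq.
  destruct (diagonal_convergent_subseq (fun j n => u n (grid j)) B (fun j n => HB n (grid j)))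
    as [phi [Hphi Hc]].
  exists phi. split; [exact Hphi|]. apply cauchy_locally_uniformly_limit.
  apply equicontinuous_grid_cauchy; [|exact Hc].
  intros eps He. destruct (Heq eps He) as [d [Hd Hu]]. exists d. split; auto.
Qed.

Lemma cv_locally_uniformly_subseq u v phi : cv_locally_uniformly u v -> incr_seq phi ->
  cv_locally_uniformly (fun n => u (phi n)) v.
Proof.
  intros H Hp T eps He. destruct (H T eps He) as [N HN]. exists N. intros n Hn t Ht.
  apply HN; auto. eapply Nat.le_trans; [exact Hn | apply incr_seq_ge; auto].
Qed.

Lemma cv_locally_uniformly_bound u v B : (forall n t, Rabs (u n t) <= B) ->
  cv_locally_uniformly u v -> forall t, Rabs (v t) <= B.
Proof.
  intros HB H t. apply Rnot_lt_le. intros Hlt.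
  destruct (H (Rabs t) ((Rabs (v t) - B) / 2)) as [N HN]; [lra|].
  specialize (HN N (Nat.le_refl _) t (Rle_refl _)). specialize (HB N t).
  assert (Rabs (v t) <= Rabs (u N t) + Rabs (u N t - v t)).
  { replace (v t) with (u N t - (u N t - v t)) at 1 by ring.
    eapply Rle_trans; [apply Rabs_triang|]. rewrite Rabs_Ropp. lra. }
  lra.
Qed.

Lemma cv_locally_uniformly_contR u v : equicontinuous u -> cv_locally_uniformly u v -> contR v.
Proof.
  intros He H t. apply continuous_eps_delta. intros eps Heps.
  destruct (He (eps / 3)) as [d [Hd Hu]]; [lra|].
  exists (Rmin d 1). split; [apply Rmin_pos; lra|].
  intros y Hy. apply Rmin_Rgt in Hy as [Hyd Hy1].
  destruct (H (Rabs t + 1) (eps / 4)) as [N HN]; [lra|].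
  assert (Hyt : Rabs y <= Rabs t + 1).
  { replace y with (t + (y - t)) by ring. eapply Rle_trans; [apply Rabs_triang|]. lra. }
  assert (A1 := HN N (Nat.le_refl _) y Hyt). assert (A2 := HN N (Nat.le_refl _) t ltac:(lra)).
  assert (A3 := Hu N y t Hyd).
  replace (v y - v t) with (- (u N y - v y) + (u N y - u N t) + (u N t - v t)) by ring.
  eapply Rle_lt_trans; [apply Rabs_triang|].
  eapply Rle_lt_trans; [apply Rplus_le_compat_r, Rabs_triang|]. rewrite Rabs_Ropp. lra.
Qed.

(* The weight [e^{-mu|t|}] makes the uniformly bounded tail [|t| > T] small. *)
Lemma cv_locally_uniformly_weighted u v B mu : 0 < mu ->
  (forall n t, Rabs (u n t) <= B) -> (forall t, Rabs (v t) <= B) -> cv_locally_uniformly u v ->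
  forall eps, 0 < eps -> exists N, forall n, (N <= n)%nat -> forall t,
    exp (- mu * Rabs t) * Rabs (u n t - v t) <= eps.
Proof.
  intros Hmu Hu Hv H eps He.
  assert (HB : 0 <= B) by (eapply Rle_trans; [apply Rabs_pos | apply (Hv 0)]).
  destruct (exp_decay_eventually (2 * B) mu eps) as [T [_ HT]]; [lra | exact Hmu | exact He|].
  destruct (H T eps He) as [N HN]. exists N. intros n Hn t.
  assert (P := exp_pos (- mu * Rabs t)). assert (Q := Rabs_pos (u n t - v t)).
  destruct (Rle_dec (Rabs t) T) as [Ht|Ht].
  - assert (exp (- mu * Rabs t) <= 1)
      by (rewrite <- exp_0; apply exp_le; generalize (Rabs_pos t); nra).
    specialize (HN n Hn t Ht). nra.
  - assert (E := HT (Rabs t) ltac:(lra)).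
    assert (Rabs (u n t - v t) <= 2 * B).
    { eapply Rle_trans; [apply Rabs_triang|]. rewrite Rabs_Ropp. generalize (Hu n t) (Hv t). lra. }
    nra.
Qed.

Lemma cv_locally_uniformly_mu_norm (u : nat -> fn3) (v : fn3) B mu : 0 < mu ->
  (forall n t, vnorm3 (u n) t <= B) ->
  equicontinuous (fun n => p1 (u n)) -> equicontinuous (fun n => p2 (u n)) ->
  equicontinuous (fun n => p3 (u n)) ->
  cv_locally_uniformly (fun n => p1 (u n)) (p1 v) ->
  cv_locally_uniformly (fun n => p2 (u n)) (p2 v) ->
  cv_locally_uniformly (fun n => p3 (u n)) (p3 v) ->
  Bmu mu v /\ forall eps, 0 < eps -> exists N, forall n, (N <= n)%nat ->
    Rbar_lt (mu_norm mu (sub3 (u n) v)) (Finite eps).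
Proof.
  intros Hmu HB E1 E2 E3 U1 U2 U3.
  assert (HBi : forall comp, projection comp -> forall n t, Rabs (comp (u n) t) <= B)
    by (intros comp Hp n t; eapply Rle_trans; [apply projection_abs_le, Hp | apply HB]).
  assert (V1 := cv_locally_uniformly_bound _ _ B (HBi p1 projection_p1) U1).
  assert (V2 := cv_locally_uniformly_bound _ _ B (HBi p2 projection_p2) U2).
  assert (V3 := cv_locally_uniformly_bound _ _ B (HBi p3 projection_p3) U3).
  split.
  - apply (Bmu_of_bounded mu _ B); [lra | | intros t; apply vnorm_le; auto].
    split; [|split]; [exact (cv_locally_uniformly_contR _ _ E1 U1)
    | exact (cv_locally_uniformly_contR _ _ E2 U2) | exact (cv_locally_uniformly_contR _ _ E3 U3)].
  - intros eps He.
    destruct (cv_locally_uniformly_weighted _ _ B mu Hmu (HBi p1 projection_p1) V1 U1 (eps / 2))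
      as [N1 HN1]; [lra|].
    destruct (cv_locally_uniformly_weighted _ _ B mu Hmu (HBi p2 projection_p2) V2 U2 (eps / 2))
      as [N2 HN2]; [lra|].
    destruct (cv_locally_uniformly_weighted _ _ B mu Hmu (HBi p3 projection_p3) V3 U3 (eps / 2))
      as [N3 HN3]; [lra|].
    exists (Nat.max N1 (Nat.max N2 N3)). intros n Hn.
    apply (mu_norm_lt mu _ (eps / 2) eps); [| lra].
    intros t. apply vnorm_scaled_le; [apply (HN1 n) | apply (HN2 n) | apply (HN3 n)]; lia.
Qed.

Lemma equicontinuous_subseq (w : nat -> R -> R) phi :
  equicontinuous w -> equicontinuous (fun n => w (phi n)).
Proof. intros Hw eps He. destruct (Hw eps He) as [d [Hd Hu]]. exists d. split; auto. Qed.

Lemma mu_norm_relatively_compact (u : nat -> fn3) B mu : 0 < mu ->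
  (forall n t, vnorm3 (u n) t <= B) ->
  equicontinuous (fun n => p1 (u n)) -> equicontinuous (fun n => p2 (u n)) ->
  equicontinuous (fun n => p3 (u n)) ->
  exists (sub : nat -> nat) (Lim : fn3), incr_seq sub /\ Bmu mu Lim /\
    forall eps, 0 < eps -> exists N, forall n, (N <= n)%nat ->
      Rbar_lt (mu_norm mu (sub3 (u (sub n)) Lim)) (Finite eps).
Proof.
  intros Hmu HB E1 E2 E3.
  assert (HBi : forall comp, projection comp -> forall n t, Rabs (comp (u n) t) <= B)
    by (intros comp Hp n t; eapply Rle_trans; [apply projection_abs_le, Hp | apply HB]).
  destruct (arzela_ascoli _ B (fun n => HBi p1 projection_p1 n) E1) as [ph1 [Hph1 [v1 Hv1]]].
  destruct (arzela_ascoli _ B (fun n => HBi p2 projection_p2 (ph1 n)) (equicontinuous_subseq _ ph1 E2))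
    as [ph2 [Hph2 [v2 Hv2]]].
  destruct (arzela_ascoli _ B (fun n => HBi p3 projection_p3 (ph1 (ph2 n)))
    (equicontinuous_subseq _ (fun n => ph1 (ph2 n)) E3)) as [ph3 [Hph3 [v3 Hv3]]].
  exists (fun n => ph1 (ph2 (ph3 n))), (mk3 v1 v2 v3).
  split; [exact (incr_seq_comp _ _ Hph1 (incr_seq_comp _ _ Hph2 Hph3))|].
  apply cv_locally_uniformly_mu_norm with B; auto;
    try apply (equicontinuous_subseq (fun n => _ (u n)) (fun n => ph1 (ph2 (ph3 n)))); auto.
  - exact (cv_locally_uniformly_subseq _ _ _ Hv1 (incr_seq_comp _ _ Hph2 Hph3)).
  - exact (cv_locally_uniformly_subseq _ _ _ Hv2 Hph3).
Qed.

(** * The operator [F = (F1, F2, F3)] on [Gamma] *)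

Lemma le3_refl A : le3 A A.
Proof. intros t. repeat split; lra. Qed.

Section Operator.
Context {sigma c D1 D2 D3 r1 r2 r3 M1 M2 M3 L1 L2 L3 beta1 beta2 beta3 K1 K2 K3 : R}
  {delta1 delta2 delta3 : R} {f1 f2 f3 : Ffun} {G1 G2 G3 : R -> R} {Up Lo : fn3}.
Hypotheses (W1 : wave_component sigma M1 M2 M3 D1 c r1 beta1 K1 delta1 L1 f1 G1)
  (W2 : wave_component sigma M1 M2 M3 D2 c r2 beta2 K2 delta2 L2 f2 G2)
  (W3 : wave_component sigma M1 M2 M3 D3 c r3 beta3 K3 delta3 L3 f3 G3)
  (HPQM : condPQM sigma M1 M2 M3 beta1 beta2 beta3 f1 f2 f3)
  (HUL : upper_lower c D1 D2 D3 r1 r2 r3 f1 f2 f3 Up Lo)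
  (H0L : le3 (mk3 (cst 0) (cst 0) (cst 0)) Lo) (HLU : le3 Lo Up)
  (HUM : le3 Up (mk3 (cst M1) (cst M2) (cst M3))).

Local Notation F := (Fop3 G1 G2 G3 f1 f2 f3 beta1 beta2 beta3 r1 r2 r3).

Lemma between_in_box Phi : cont3 Phi -> le3 Lo Phi -> le3 Phi Up -> in_box M1 M2 M3 Phi.
Proof.
  intros HC H1 H2. split; [exact HC|]. intros t.
  destruct (H0L t) as [a1 [a2 a3]]. destruct (H1 t) as [b1 [b2 b3]].
  destruct (H2 t) as [c1 [c2 c3]]. destruct (HUM t) as [d1 [d2 d3]].
  simpl in *. unfold cst in *. repeat split; lra.
Qed.

Lemma Lo_in_box : in_box M1 M2 M3 Lo.
Proof.
  destruct HUL as [_ [_ [_ [C1 [C2 [C3 _]]]]]].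
  apply between_in_box; [|apply le3_refl | exact HLU].
  split; [|split]; apply C2bnd_contR; assumption.
Qed.

Lemma Up_in_box : in_box M1 M2 M3 Up.
Proof.
  destruct HUL as [C1 [C2 [C3 _]]].
  apply between_in_box; [| exact HLU | apply le3_refl].
  split; [|split]; apply C2bnd_contR; assumption.
Qed.

Lemma GammaSet_in_box Phi : GammaSet Lo Up Phi -> in_box M1 M2 M3 Phi.
Proof. intros [HC [H1 H2]]. now apply between_in_box. Qed.

Lemma Fop3_Gamma_invariant Phi : GammaSet Lo Up Phi ->
  GammaSet Lo Up (F Phi) /\
  sandwich (p1 Lo) (Fop G1 f1 beta1 r1 p1 Lo) (Fop G1 f1 beta1 r1 p1 Phi)
           (Fop G1 f1 beta1 r1 p1 Up) (p1 Up) /\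
  sandwich (p2 Lo) (Fop G2 f2 beta2 r2 p2 (mk3 (p1 Up) (p2 Lo) (p3 Up)))
           (Fop G2 f2 beta2 r2 p2 Phi)
           (Fop G2 f2 beta2 r2 p2 (mk3 (p1 Lo) (p2 Up) (p3 Lo))) (p2 Up) /\
  sandwich (p3 Lo) (Fop G3 f3 beta3 r3 p3 Lo) (Fop G3 f3 beta3 r3 p3 Phi)
           (Fop G3 f3 beta3 r3 p3 Up) (p3 Up).
Proof.
  intros HPhi. assert (BP := GammaSet_in_box Phi HPhi). destruct HPhi as [HcP [HLP HPU]].
  assert (BL := Lo_in_box). assert (BU := Up_in_box).
  destruct HUL as [CU1 [CU2 [CU3 [CL1 [CL2 [CL3 Hw]]]]]].
  assert (S1 : sandwich (p1 Lo) (Fop G1 f1 beta1 r1 p1 Lo) (Fop G1 f1 beta1 r1 p1 Phi)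
                        (Fop G1 f1 beta1 r1 p1 Up) (p1 Up)).
  { apply (Fop_sandwich W1 projection_p1); auto; intros t; try apply Hw;
      apply (Hop1_le sigma M1 M2 M3 beta1 beta2 beta3 f1 f2 f3 HPQM); auto. }
  assert (S2 : sandwich (p2 Lo) (Fop G2 f2 beta2 r2 p2 (mk3 (p1 Up) (p2 Lo) (p3 Up)))
                        (Fop G2 f2 beta2 r2 p2 Phi)
                        (Fop G2 f2 beta2 r2 p2 (mk3 (p1 Lo) (p2 Up) (p3 Lo))) (p2 Up)).
  { apply (Fop_sandwich W2 projection_p2 (mk3 (p1 Up) (p2 Lo) (p3 Up)) (mk3 (p1 Lo) (p2 Up) (p3 Lo)));
      auto using in_box_mix; intros t; try apply Hw.
    - apply (Hop2_mixed_lower sigma M1 M2 M3 beta1 beta2 beta3 f1 f2 f3 HPQM); auto.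
    - apply (Hop2_mixed_upper sigma M1 M2 M3 beta1 beta2 beta3 f1 f2 f3 HPQM); auto. }
  assert (S3 : sandwich (p3 Lo) (Fop G3 f3 beta3 r3 p3 Lo) (Fop G3 f3 beta3 r3 p3 Phi)
                        (Fop G3 f3 beta3 r3 p3 Up) (p3 Up)).
  { apply (Fop_sandwich W3 projection_p3); auto; intros t; try apply Hw;
      apply (Hop3_le sigma M1 M2 M3 beta1 beta2 beta3 f1 f2 f3 HPQM); auto. }
  split; [|auto]. split; [|split].
  - split; [|split];
      [exact (Fop_contR W1 projection_p1 Phi BP) | exact (Fop_contR W2 projection_p2 Phi BP)
      | exact (Fop_contR W3 projection_p3 Phi BP)].
  - intros t. destruct (S1 t) as [a1 [a2 _]]. destruct (S2 t) as [b1 [b2 _]].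
    destruct (S3 t) as [c1 [c2 _]]. simpl. repeat split; lra.
  - intros t. destruct (S1 t) as [_ [_ [a1 a2]]]. destruct (S2 t) as [_ [_ [b1 b2]]].
    destruct (S3 t) as [_ [_ [c1 c2]]]. simpl. repeat split; lra.
Qed.

Lemma Fop3_in_box Phi : GammaSet Lo Up Phi -> in_box M1 M2 M3 (F Phi).
Proof. intros HPhi. apply GammaSet_in_box, (Fop3_Gamma_invariant Phi HPhi). Qed.

Lemma Fop3_weighted_lipschitz mu : 0 < mu -> mu < Rmin delta1 (Rmin delta2 delta3) ->
  exists C, 0 <= C /\ forall Phi Psi del, 0 <= del -> GammaSet Lo Up Phi -> GammaSet Lo Up Psi ->
    (forall x, vnorm3 (sub3 Psi Phi) x <= del * exp (mu * Rabs x)) ->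
    forall t, vnorm3 (sub3 (F Psi) (F Phi)) t <= C * del * exp (mu * Rabs t).
Proof.
  intros Hmu Hmd. apply Rmin_Rgt in Hmd as [Hmd1 Hmd]. apply Rmin_Rgt in Hmd as [Hmd2 Hmd3].
  destruct (Fop_weighted_lipschitz W1 projection_p1 mu Hmu Hmd1) as [C1 [HC1 E1]].
  destruct (Fop_weighted_lipschitz W2 projection_p2 mu Hmu Hmd2) as [C2 [HC2 E2]].
  destruct (Fop_weighted_lipschitz W3 projection_p3 mu Hmu Hmd3) as [C3 [HC3 E3]].
  exists (C1 + C2 + C3). split; [lra|].
  intros Phi Psi del Hdel HPhi HPsi Hdiff t.
  apply GammaSet_in_box in HPhi. apply GammaSet_in_box in HPsi.
  assert (Hw : 0 <= del * exp (mu * Rabs t)) by (apply Rmult_le_pos; [lra | left; apply exp_pos]).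
  apply vnorm_le; simpl;
    [eapply Rle_trans; [apply E1; auto|] | eapply Rle_trans; [apply E2; auto|]
    | eapply Rle_trans; [apply E3; auto|]]; nra.
Qed.

Lemma Fop3_equicontinuous (Phis : nat -> fn3) : (forall n, GammaSet Lo Up (Phis n)) ->
  equicontinuous (fun n => p1 (F (Phis n))) /\ equicontinuous (fun n => p2 (F (Phis n))) /\
  equicontinuous (fun n => p3 (F (Phis n))).
Proof.
  intros HPh. split; [|split]; intros eps He;
    [destruct (Fop_equicontinuous W1 projection_p1 eps He) as [del [Hdel Hu]]
    |destruct (Fop_equicontinuous W2 projection_p2 eps He) as [del [Hdel Hu]]
    |destruct (Fop_equicontinuous W3 projection_p3 eps He) as [del [Hdel Hu]]];
    exists del; split; auto; intros n; apply Hu, GammaSet_in_box, HPh.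
Qed.

End Operator.
Theorem mainTheorem4
  (sigma c D1 D2 D3 r1 r2 r3 k1 k2 k3 M1 M2 M3 : R)
  (f1 f2 f3 : (R -> R) -> (R -> R) -> (R -> R) -> R)
  (L1 L2 L3 beta1 beta2 beta3 K1 K2 K3 delta1 delta2 delta3 : R)
  (G1 G2 G3 : R -> R) (Up Lo : fn3) (mu : R) :
  0 < sigma -> 0 < c -> 0 < D1 -> 0 < D2 -> 0 < D3 ->
  0 < k1 -> 0 < k2 -> 0 < k3 -> k1 <= M1 -> k2 <= M2 -> k3 <= M3 ->
  local3 sigma f1 -> local3 sigma f2 -> local3 sigma f3 ->
  condC1 k1 k2 k3 f1 -> condC1 k1 k2 k3 f2 -> condC1 k1 k2 k3 f3 ->
  0 < L1 -> 0 < L2 -> 0 < L3 ->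
  condC2 sigma M1 M2 M3 L1 f1 -> condC2 sigma M1 M2 M3 L2 f2 -> condC2 sigma M1 M2 M3 L3 f3 ->
  0 < beta1 -> 0 < beta2 -> 0 < beta3 ->
  condPQM sigma M1 M2 M3 beta1 beta2 beta3 f1 f2 f3 ->
  0 < K1 -> 0 < K2 -> 0 < K3 -> 0 < delta1 -> 0 < delta2 -> 0 < delta3 ->
  kernelG D1 c r1 beta1 K1 delta1 G1 ->
  kernelG D2 c r2 beta2 K2 delta2 G2 ->
  kernelG D3 c r3 beta3 K3 delta3 G3 ->
  upper_lower c D1 D2 D3 r1 r2 r3 f1 f2 f3 Up Lo ->
  le3 (mk3 (cst 0) (cst 0) (cst 0)) Lo -> le3 Lo Up -> le3 Up (mk3 (cst M1) (cst M2) (cst M3)) ->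
  0 < mu -> mu < Rmin delta1 (Rmin delta2 delta3) ->
  (* (i) *)
  (forall Phi, GammaSet Lo Up Phi ->
     GammaSet Lo Up (Fop3 G1 G2 G3 f1 f2 f3 beta1 beta2 beta3 r1 r2 r3 Phi) /\
     (forall t,
        p1 Lo t <= Fop G1 f1 beta1 r1 p1 Lo t /\
        Fop G1 f1 beta1 r1 p1 Lo t <= Fop G1 f1 beta1 r1 p1 Phi t /\
        Fop G1 f1 beta1 r1 p1 Phi t <= Fop G1 f1 beta1 r1 p1 Up t /\
        Fop G1 f1 beta1 r1 p1 Up t <= p1 Up t) /\
     (forall t,
        p2 Lo t <= Fop G2 f2 beta2 r2 p2 (mk3 (p1 Up) (p2 Lo) (p3 Up)) t /\
        Fop G2 f2 beta2 r2 p2 (mk3 (p1 Up) (p2 Lo) (p3 Up)) t <= Fop G2 f2 beta2 r2 p2 Phi t /\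
        Fop G2 f2 beta2 r2 p2 Phi t <= Fop G2 f2 beta2 r2 p2 (mk3 (p1 Lo) (p2 Up) (p3 Lo)) t /\
        Fop G2 f2 beta2 r2 p2 (mk3 (p1 Lo) (p2 Up) (p3 Lo)) t <= p2 Up t) /\
     (forall t,
        p3 Lo t <= Fop G3 f3 beta3 r3 p3 Lo t /\
        Fop G3 f3 beta3 r3 p3 Lo t <= Fop G3 f3 beta3 r3 p3 Phi t /\
        Fop G3 f3 beta3 r3 p3 Phi t <= Fop G3 f3 beta3 r3 p3 Up t /\
        Fop G3 f3 beta3 r3 p3 Up t <= p3 Up t)) /\
  (* (ii) *)
  (forall Phi, GammaSet Lo Up Phi ->
     Bmu mu (Fop3 G1 G2 G3 f1 f2 f3 beta1 beta2 beta3 r1 r2 r3 Phi)) /\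
  (forall Phi, GammaSet Lo Up Phi -> forall eps, 0 < eps ->
     exists del, 0 < del /\
       forall Psi, GammaSet Lo Up Psi ->
         Rbar_lt (mu_norm mu (sub3 Psi Phi)) (Finite del) ->
         Rbar_lt (mu_norm mu (sub3 (Fop3 G1 G2 G3 f1 f2 f3 beta1 beta2 beta3 r1 r2 r3 Psi)
                                   (Fop3 G1 G2 G3 f1 f2 f3 beta1 beta2 beta3 r1 r2 r3 Phi)))
                 (Finite eps)) /\
  (* (iii), as sequential relative compactness *)
  (forall Phis : nat -> fn3, (forall n, GammaSet Lo Up (Phis n)) ->
     exists (sub : nat -> nat) (Lim : fn3),
       (forall n, (sub n < sub (S n))%nat) /\ Bmu mu Lim /\
       forall eps, 0 < eps -> exists N, forall n, (N <= n)%nat ->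
         Rbar_lt (mu_norm mu (sub3 (Fop3 G1 G2 G3 f1 f2 f3 beta1 beta2 beta3 r1 r2 r3 (Phis (sub n))) Lim))
                 (Finite eps)).
Proof.
  intros Hs _ _ _ _ Hk1 Hk2 Hk3 HkM1 HkM2 HkM3 _ _ _ [Hf1 _] [Hf2 _] [Hf3 _] HL1 HL2 HL3
    Hlip1 Hlip2 Hlip3 Hb1 Hb2 Hb3 HPQM HK1 HK2 HK3 Hd1 Hd2 Hd3 HG1 HG2 HG3 HUL H0L HLU HUM Hmu Hmud.
  assert (W1 : wave_component sigma M1 M2 M3 D1 c r1 beta1 K1 delta1 L1 f1 G1)
    by (constructor; auto; try lra; repeat split; lra).
  assert (W2 : wave_component sigma M1 M2 M3 D2 c r2 beta2 K2 delta2 L2 f2 G2)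
    by (constructor; auto; try lra; repeat split; lra).
  assert (W3 : wave_component sigma M1 M2 M3 D3 c r3 beta3 K3 delta3 L3 f3 G3)
    by (constructor; auto; try lra; repeat split; lra).
  assert (Hi := Fop3_Gamma_invariant W1 W2 W3 HPQM HUL H0L HLU HUM).
  assert (Hbox := Fop3_in_box W1 W2 W3 HPQM HUL H0L HLU HUM).
  split; [exact Hi | split; [|split]].
  - intros Phi HPhi. apply (Bmu_of_bounded mu _ (box_max M1 M2 M3)); [lra | apply Hbox, HPhi |].
    apply in_box_vnorm3, Hbox, HPhi.
  - destruct (Fop3_weighted_lipschitz W1 W2 W3 H0L HUM mu Hmu Hmud) as [C [HC HT]].
    exact (mu_norm_continuous _ _ mu C HC HT).
  - intros Phis HPh.
    destruct (Fop3_equicontinuous W1 W2 W3 H0L HUM Phis HPh) as [E1 [E2 E3]].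
    apply (mu_norm_relatively_compact
      (fun n => Fop3 G1 G2 G3 f1 f2 f3 beta1 beta2 beta3 r1 r2 r3 (Phis n)) (box_max M1 M2 M3) mu Hmu);
      auto.
    intros n. apply in_box_vnorm3, Hbox, HPh.
Qed.
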